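(* Let $0<\alpha<1$ and let $f\in L^1_{1-\alpha}([0,1[)$ be locally contracting on $[0,1[$ with $f(0)=0$. Then $(D_\alpha f)(0)$ exists and equals $0$.
   Context: Fourier coefficients: $\widehat h(s)=\frac1{2\pi}\int_{-\pi}^{\pi}h(\theta)e^{-is\theta}d\theta$; $T_N(h)$ is the $(N+1)\times(N+1)$ matrix with $(T_N(h))_{k+1,l+1}=\widehat h(k-l)$, $0\le k,l\le N$. $\varphi_{\alpha,R}(\theta)=(1-Re^{i\theta})^{\alpha}(1+Re^{-i\theta})^{\alpha}$ (principal branch), $\varphi_\alpha=\lim_{R\to1^-}\varphi_{\alpha,R}$. For $f$ on $[0,1[$ (with $f(1)$ set to $0$ since it is not defined), $X_N\in\mathbb R^{N+1}$ with $(X_N)_l=f(l/N)$. $f$ is $\alpha$-derivable at $x\in[0,1]$ if $\lim_{N\to+\infty}N^{\alpha}\sum_{l=0}^{N}(T_N(\varphi_\alpha))_{k+1,l+1}(X_N)_l$, $k=[Nx]$, exists and is finite; its value is $(D_\alpha f)(x)$. Locally contracting on $[0,1[$: Lipschitz on every compact interval contained in $[0,1[$. $f\in L^1_{1-\alpha}([0,1[)$ means there is $\gamma\in[0,1-\alpha]$ with $f(x)=O(x^{-\gamma})$ and $f(1-x)=O(x^{-\gamma})$ as $x\to0^+$. *)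

From Stdlib Require Import Reals ZArith.
From Coquelicot Require Import Coquelicot.
Open Scope R_scope.

Definition Cexpi (t : R) : C := (cos t, sin t).

(* Principal argument of a complex number, with values in ]-PI, PI]
   (Arg 0 := 0, irrelevant). *)
Definition Arg (z : C) : R :=
  let x := fst z in let y := snd z in
  if Rlt_dec 0 x then atan (y / x)
  else if Rlt_dec x 0 then
         (if Rle_dec 0 y then atan (y / x) + PI else atan (y / x) - PI)
  else if Rlt_dec 0 y then PI / 2
  else if Rlt_dec y 0 then - (PI / 2)
  else 0.

(* Principal branch of z^a = exp (a Log z), Log z = ln |z| + i Arg z;
   0^a := 0 (a > 0 here). *)
Definition Cpow (z : C) (a : R) : C :=
  if Req_EM_T (Cmod z) 0 then (0%R, 0%R)
  else (exp (a * ln (Cmod z)) * cos (a * Arg z),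
        exp (a * ln (Cmod z)) * sin (a * Arg z)).

Definition phiR (a Rr theta : R) : C :=
  Cmult (Cpow (Cminus (RtoC 1) (Cmult (RtoC Rr) (Cexpi theta))) a)
        (Cpow (Cplus (RtoC 1) (Cmult (RtoC Rr) (Cexpi (- theta)))) a).

Definition phi (a theta : R) : C :=
  @lim C_R_CompleteNormedModule (filtermap (fun Rr => phiR a Rr theta) (at_left 1)).

Definition fourier (h : R -> C) (s : Z) : C :=
  Cmult (RtoC (/ (2 * PI)))
        (RInt (V := C_R_CompleteNormedModule)
              (fun theta => Cmult (h theta) (Cexpi (- (IZR s * theta)))) (- PI) PI).

(* (T_N(h))_{k+1,l+1} = hat h (k - l), for 0 <= k,l <= N *)
Definition toeplitz (h : R -> C) (k l : nat) : C :=
  fourier h (Z.of_nat k - Z.of_nat l)%Z.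

(* (X_N)_l = f(l/N), with f(1) := 0 (f is only defined on [0,1[) *)
Definition XN (f : R -> R) (N l : nat) : R :=
  if (l <? N)%nat then f (INR l / INR N) else 0.

Definition alpha_seq (a : R) (f : R -> R) (x : R) (N : nat) : C :=
  let k := Z.to_nat (Int_part (INR N * x)) in
  Cmult (RtoC (Rpower (INR N) a))
        (sum_n (fun l => Cmult (toeplitz (phi a) k l) (RtoC (XN f N l))) N).

Definition is_alpha_derivative (a : R) (f : R -> R) (x : R) (L : C) : Prop :=
  filterlim (alpha_seq a f x) eventually (locally L).

Definition locally_contracting (f : R -> R) : Prop :=
  forall a b : R, 0 <= a -> b < 1 ->
    exists K : R, forall x y : R, a <= x <= b -> a <= y <= b ->
      Rabs (f x - f y) <= K * Rabs (x - y).

Definition bigO_0plus (g h : R -> R) : Prop :=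
  exists M d : R, 0 < d /\ forall t : R, 0 < t < d -> Rabs (g t) <= M * Rabs (h t).

Definition L1_weight (a : R) (f : R -> R) : Prop :=
  exists g : R, 0 <= g <= 1 - a /\
    bigO_0plus f (fun t => Rpower t (- g)) /\
    bigO_0plus (fun t => f (1 - t)) (fun t => Rpower t (- g)).

(* Since [Int_part 0 = 0], [(D_al f)(0)] is the limit of [N^al sum_l c_l f(l/N)] with
   [c_l = hat phi_al (-l)]. The partial sums of the binomial series of [(1 - R e^(it))^al]
   and [(1 + R e^(-it))^al] approximate these functions uniformly in [R < 1] and [t], with
   error [O(n^(-al))]; hence [phi_al] exists and [c_l = sum_m (-1)^m C(al,m) C(al,m+l)].
   This gives [|c_l| <= 2 al l^(-1-al)] and, by Pascal's rule
   [C(al,j) + C(al,j+1) = C(al+1,j+1)], [|c_l + c_(l+1)| <= 4 / (l (l+1))].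
   Split the sum at [N - N/q]. On [[0, 1 - 1/(2q)]], [f] is Lipschitz with [f 0 = 0], and
   summation by parts against the pair bound makes this part [O(N^(-(1-al)/2))]. Near [1],
   [|f (1 - t)| <= B t^(-g)] with [g <= 1 - al] while [c_l = O(N^(-1-al))], so that part is
   [O(q^(-al))] uniformly in [N]. Choose [q], then [N], large. *)

From Pilot Require Import Defs.
From Stdlib Require Import Reals ZArith Lra Lia.
From Coquelicot Require Import Coquelicot.
Open Scope R_scope.

Lemma INR_S_pos (n : nat) : 0 < INR (S n).
Proof. apply lt_0_INR; lia. Qed.

Lemma INR_S_ge_1 (n : nat) : 1 <= INR (S n).
Proof. apply (le_INR 1); lia. Qed.

Lemma pow_between_0_1 (t : R) (n : nat) : 0 <= t <= 1 -> 0 <= t ^ n <= 1.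
Proof. intros Ht; induction n; simpl; nra. Qed.

Lemma exists_nat_gt (x : R) : exists n : nat, x < INR n.
Proof.
  destruct (archimed (Rabs x)) as [Hup _].
  pose proof (Rle_abs x); pose proof (Rabs_pos x).
  assert (Hz : (0 < up (Rabs x))%Z) by (apply lt_IZR; simpl; lra).
  exists (Z.to_nat (up (Rabs x))).
  rewrite INR_IZR_INZ, Z2Nat.id by lia; lra.
Qed.

Lemma Rpower_pos (x y : R) : 0 < Rpower x y.
Proof. apply exp_pos. Qed.

Lemma Rpower_1_l (y : R) : Rpower 1 y = 1.
Proof. unfold Rpower; rewrite ln_1, Rmult_0_r; apply exp_0. Qed.

Lemma Rpower_m1 (x : R) : 0 < x -> Rpower x (-1) = / x.
Proof.
  intros Hx; replace (-1) with (- (1)) by ring.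
  rewrite Rpower_Ropp, Rpower_1; auto.
Qed.

Lemma Rpower_le_base_nonpos (a b y : R) :
  0 < a <= b -> y <= 0 -> Rpower b y <= Rpower a y.
Proof.
  intros Hab Hy; replace y with (- (- y)) by ring.
  rewrite (Rpower_Ropp b), (Rpower_Ropp a).
  apply Rinv_le_contravar; [apply Rpower_pos | apply Rle_Rpower_l; lra].
Qed.

Lemma Rpower_INR_vanishes (y eta : R) : 0 < y -> 0 < eta ->
  exists N0 : nat, forall N : nat, (N0 <= N)%nat -> Rpower (INR N) (- y) < eta.
Proof.
  intros Hy Heta.
  destruct (exists_nat_gt (exp (- ln eta / y))) as [n Hn].
  exists (S n); intros N HN.
  assert (HNn : INR n < INR N) by (apply lt_INR; lia).
  pose proof (exp_pos (- ln eta / y)).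
  assert (Hln : - ln eta / y < ln (INR N)).
  { rewrite <- (ln_exp (- ln eta / y)); apply ln_increasing; lra. }
  unfold Rpower; rewrite <- (exp_ln eta) by auto; apply exp_increasing.
  apply Rmult_lt_compat_l with (r := y) in Hln; [|lra].
  replace (y * (- ln eta / y)) with (- ln eta) in Hln by (field; lra); lra.
Qed.

Lemma exp_le_compat (a b : R) : a <= b -> exp a <= exp b.
Proof.
  intros [Hlt | ->]; [apply Rlt_le, exp_increasing, Hlt | apply Rle_refl].
Qed.

Lemma ln_1_plus_le (y : R) : 0 < 1 + y -> ln (1 + y) <= y.
Proof.
  intros Hy; rewrite <- (ln_exp y) at 2; apply ln_le; [assumption | apply exp_ineq1_le].
Qed.

(** * Generalized binomial coefficients *)

Fixpoint gbinom (x : R) (n : nat) : R :=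
  match n with O => 1 | S k => gbinom x k * (x - INR k) / INR (S k) end.

(* [binom_tail x n = prod_(1 <= k <= n) (1 - x / k)]; for [0 < x < 1] it is the
   tail [sum_(j > n) |gbinom x j|]. *)
Fixpoint binom_tail (x : R) (n : nat) : R :=
  match n with O => 1 | S k => binom_tail x k * (1 - x / INR (S k)) end.

Lemma gbinom_pascal (x : R) (n : nat) :
  gbinom (x + 1) (S n) = gbinom x n + gbinom x (S n).
Proof.
  induction n as [|n IHn]; [simpl; field|].
  change (gbinom (x + 1) (S (S n)))
    with (gbinom (x + 1) (S n) * (x + 1 - INR (S n)) / INR (S (S n))).
  change (gbinom x (S (S n))) with (gbinom x (S n) * (x - INR (S n)) / INR (S (S n))).
  rewrite IHn.
  change (gbinom x (S n)) with (gbinom x n * (x - INR n) / INR (S n)).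
  pose proof (INR_S_pos n); pose proof (INR_S_pos (S n)).
  rewrite !S_INR in *; field; lra.
Qed.

Lemma abs_gbinom_SS_le (x : R) (n : nat) : 1 <= x <= 2 ->
  Rabs (gbinom x (S (S n))) <= 2 / (INR (S n) * INR (S (S n))).
Proof.
  intros Hx; induction n as [|n IHn].
  - simpl; replace (1 * (x - 0) / 1 * (x - 1) / (1 + 1)) with (x * (x - 1) / 2) by field.
    rewrite Rabs_right by (apply Rle_ge; unfold Rdiv; apply Rmult_le_pos; nra).
    unfold Rdiv; nra.
  - change (gbinom x (S (S (S n))))
      with (gbinom x (S (S n)) * (x - INR (S (S n))) / INR (S (S (S n)))).
    pose proof (pos_INR n); pose proof (INR_S_pos (S (S n))).
    assert (Hfac : Rabs (x - INR (S (S n))) <= INR (S n))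
      by (rewrite !S_INR; unfold Rabs; destruct Rcase_abs; lra).
    unfold Rdiv; rewrite !Rabs_mult, (Rabs_right (/ _)) by (apply Rle_ge, Rlt_le, Rinv_0_lt_compat; lra).
    apply Rle_trans with (2 / (INR (S n) * INR (S (S n))) * INR (S n) * / INR (S (S (S n)))).
    + apply Rmult_le_compat_r; [apply Rlt_le, Rinv_0_lt_compat; lra|].
      apply Rmult_le_compat; auto using Rabs_pos.
    + rewrite !S_INR; apply Req_le; field; lra.
Qed.

Section BinomialCoefficients.
Variable x : R.
Hypothesis Hx : 0 < x < 1.

Lemma binom_tail_factor_bounds (n : nat) : 0 < 1 - x / INR (S n) <= 1.
Proof.
  pose proof (INR_S_ge_1 n).
  assert (0 < x / INR (S n) < 1); [|lra].
  split; [apply Rdiv_lt_0_compat; lra|].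
  apply Rmult_lt_reg_r with (INR (S n)); [lra|].
  unfold Rdiv; rewrite Rmult_assoc, Rinv_l, Rmult_1_r, Rmult_1_l by lra; lra.
Qed.

Lemma binom_tail_pos (n : nat) : 0 < binom_tail x n.
Proof.
  induction n; cbn [binom_tail]; [lra|].
  pose proof (binom_tail_factor_bounds n); apply Rmult_lt_0_compat; lra.
Qed.

Lemma binom_tail_le_1 (n : nat) : binom_tail x n <= 1.
Proof.
  induction n; cbn [binom_tail]; [lra|].
  pose proof (binom_tail_factor_bounds n); pose proof (binom_tail_pos n); nra.
Qed.

Lemma binom_tail_S_le (n : nat) : binom_tail x (S n) <= binom_tail x n.
Proof.
  cbn [binom_tail]; pose proof (binom_tail_factor_bounds n); pose proof (binom_tail_pos n); nra.
Qed.

Lemma binom_tail_add_le (n k : nat) : binom_tail x (n + k) <= binom_tail x n.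
Proof.
  induction k; [rewrite Nat.add_0_r; lra|].
  rewrite Nat.add_succ_r; eapply Rle_trans; [apply binom_tail_S_le | exact IHk].
Qed.

Lemma gbinom_S (n : nat) :
  gbinom x (S n) = (-1) ^ n * (x / INR (S n) * binom_tail x n).
Proof.
  induction n as [|n IHn]; [simpl; field|].
  change (gbinom x (S (S n))) with (gbinom x (S n) * (x - INR (S n)) / INR (S (S n))).
  rewrite IHn; cbn [binom_tail]; rewrite <- tech_pow_Rmult.
  pose proof (INR_S_pos n); pose proof (INR_S_pos (S n)); field; lra.
Qed.

Lemma abs_gbinom_S (n : nat) :
  Rabs (gbinom x (S n)) = binom_tail x n - binom_tail x (S n).
Proof.
  rewrite gbinom_S, Rabs_mult, pow_1_abs, Rmult_1_l; cbn [binom_tail].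
  pose proof (binom_tail_pos n); pose proof (INR_S_pos n).
  rewrite Rabs_right; [ring|].
  apply Rle_ge, Rmult_le_pos; [apply Rlt_le, Rdiv_lt_0_compat|]; lra.
Qed.

Lemma abs_gbinom_S_le_inv (n : nat) : Rabs (gbinom x (S n)) <= / INR (S n).
Proof.
  rewrite gbinom_S, Rabs_mult, pow_1_abs, Rmult_1_l.
  pose proof (binom_tail_pos n); pose proof (binom_tail_le_1 n); pose proof (INR_S_pos n).
  assert (Hinv : 0 < / INR (S n)) by (apply Rinv_0_lt_compat; lra).
  rewrite Rabs_right by (apply Rle_ge; unfold Rdiv; repeat apply Rmult_le_pos; lra).
  assert (x * binom_tail x n <= 1) by nra.
  unfold Rdiv; nra.
Qed.

Lemma abs_gbinom_S_le (n : nat) : Rabs (gbinom x (S n)) <= Rabs (gbinom x n).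
Proof.
  change (gbinom x (S n)) with (gbinom x n * (x - INR n) / INR (S n)).
  pose proof (INR_S_pos n); pose proof (pos_INR n).
  unfold Rdiv; rewrite !Rabs_mult, Rmult_assoc.
  rewrite (Rabs_right (/ _)) by (apply Rle_ge, Rlt_le, Rinv_0_lt_compat; lra).
  rewrite <- (Rmult_1_r (Rabs (gbinom x n))) at 2.
  apply Rmult_le_compat_l; [apply Rabs_pos|].
  rewrite <- (Rinv_r (INR (S n))) by lra.
  apply Rmult_le_compat_r; [apply Rlt_le, Rinv_0_lt_compat; lra|].
  rewrite S_INR in *; unfold Rabs; destruct Rcase_abs; lra.
Qed.

Lemma abs_gbinom_le (m n : nat) : (m <= n)%nat -> Rabs (gbinom x n) <= Rabs (gbinom x m).
Proof.
  induction 1; [lra|]; eapply Rle_trans; [apply abs_gbinom_S_le | assumption].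
Qed.

Lemma abs_gbinom_le_1 (n : nat) : Rabs (gbinom x n) <= 1.
Proof.
  replace 1 with (Rabs (gbinom x 0)) by (simpl; apply Rabs_R1).
  apply abs_gbinom_le; lia.
Qed.

(* [1 - x/(n+1) <= exp (-x/(n+1))] and [ln (n+2) - ln (n+1) <= 1/(n+1)]. *)
Lemma binom_tail_le_Rpower (n : nat) : binom_tail x n <= Rpower (INR (S n)) (- x).
Proof.
  induction n as [|n IHn]; [simpl; rewrite Rpower_1_l; lra|].
  cbn [binom_tail].
  pose proof (INR_S_pos n) as Hn; pose proof (binom_tail_factor_bounds n).
  pose proof (binom_tail_pos n).
  assert (Hfac : 1 - x / INR (S n) <= exp (- (x / INR (S n))))
    by (pose proof (exp_ineq1_le (- (x / INR (S n)))); lra).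
  assert (Hln : ln (INR (S (S n))) <= ln (INR (S n)) + / INR (S n)).
  { replace (INR (S (S n))) with (INR (S n) * (1 + / INR (S n)))
      by (rewrite (S_INR (S n)); field; lra).
    pose proof (Rinv_0_lt_compat _ Hn).
    rewrite ln_mult by lra; apply Rplus_le_compat_l, ln_1_plus_le; lra. }
  apply Rle_trans with (Rpower (INR (S n)) (- x) * exp (- (x / INR (S n)))).
  - apply Rmult_le_compat; lra.
  - unfold Rpower; rewrite <- exp_plus; apply exp_le_compat.
    unfold Rdiv; nra.
Qed.

Lemma abs_gbinom_S_le_Rpower (n : nat) :
  Rabs (gbinom x (S n)) <= x * Rpower (INR (S n)) (-1 - x).
Proof.
  rewrite gbinom_S, Rabs_mult, pow_1_abs, Rmult_1_l.
  pose proof (binom_tail_pos n); pose proof (INR_S_pos n).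
  rewrite Rabs_right by (apply Rle_ge, Rmult_le_pos; [apply Rlt_le, Rdiv_lt_0_compat|]; lra).
  replace (-1 - x) with (-1 + - x) by ring.
  rewrite Rpower_plus, Rpower_m1 by auto.
  unfold Rdiv; rewrite Rmult_assoc; apply Rmult_le_compat_l; [lra|].
  apply Rmult_le_compat_l; [apply Rlt_le, Rinv_0_lt_compat; lra|].
  apply binom_tail_le_Rpower.
Qed.

Lemma binom_tail_vanishes (e : R) : 0 < e -> exists n, binom_tail x n < e.
Proof.
  intros He; destruct (Rpower_INR_vanishes x e) as [N HN]; try lra.
  exists N; eapply Rle_lt_trans; [apply binom_tail_le_Rpower | apply HN; lia].
Qed.

End BinomialCoefficients.

(** * Finite sums and derivatives of complex-valued functions *)

Fixpoint rsum (u : nat -> R) (n : nat) : R :=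
  match n with O => 0 | S k => rsum u k + u k end.

Fixpoint csum (u : nat -> C) (n : nat) : C :=
  match n with O => RtoC 0 | S k => Cplus (csum u k) (u k) end.

Lemma rsum_ext (u v : nat -> R) (n : nat) :
  (forall j, (j < n)%nat -> u j = v j) -> rsum u n = rsum v n.
Proof.
  induction n; simpl; intros H; [reflexivity|].
  f_equal; [apply IHn; intros; apply H|apply H]; lia.
Qed.

Lemma rsum_le (u v : nat -> R) (n : nat) :
  (forall j, (j < n)%nat -> u j <= v j) -> rsum u n <= rsum v n.
Proof.
  induction n; simpl; intros H; [lra|].
  apply Rplus_le_compat; [apply IHn; intros; apply H|apply H]; lia.
Qed.

Lemma rsum_nonneg (u : nat -> R) (n : nat) :
  (forall j, (j < n)%nat -> 0 <= u j) -> 0 <= rsum u n.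
Proof.
  induction n; simpl; intros H; [lra|].
  assert (0 <= u n) by (apply H; lia).
  assert (0 <= rsum u n) by (apply IHn; intros; apply H; lia); lra.
Qed.

Lemma rsum_plus (u v : nat -> R) (n : nat) :
  rsum (fun j => u j + v j) n = rsum u n + rsum v n.
Proof. induction n; simpl; [lra|]; rewrite IHn; ring. Qed.

Lemma rsum_scal (c : R) (u : nat -> R) (n : nat) :
  rsum (fun j => c * u j) n = c * rsum u n.
Proof. induction n; simpl; [lra|]; rewrite IHn; ring. Qed.

Lemma Rabs_rsum_le (u : nat -> R) (n : nat) :
  Rabs (rsum u n) <= rsum (fun j => Rabs (u j)) n.
Proof.
  induction n; simpl; [rewrite Rabs_R0; lra|].
  eapply Rle_trans; [apply Rabs_triang | lra].
Qed.

Lemma rsum_add (u : nat -> R) (a b : nat) :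
  rsum u (a + b) = rsum u a + rsum (fun i => u (a + i)%nat) b.
Proof.
  induction b; [rewrite Nat.add_0_r; simpl; ring|].
  rewrite Nat.add_succ_r; simpl; rewrite IHb; ring.
Qed.

Lemma rsum_shift (u : nat -> R) (n : nat) :
  rsum u (S n) = u 0%nat + rsum (fun i => u (S i)) n.
Proof. change (S n) with (1 + n)%nat; rewrite rsum_add; simpl; ring. Qed.

Lemma rsum_rev (u : nat -> R) (n : nat) :
  rsum (fun i => u (n - i)%nat) n = rsum (fun i => u (S i)) n.
Proof.
  induction n as [|n IHn]; [reflexivity|].
  rewrite rsum_shift; simpl (S n - 0)%nat.
  change (rsum (fun i => u (S n - S i)%nat) n) with (rsum (fun i => u (n - i)%nat) n).
  rewrite IHn; simpl; ring.
Qed.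

Lemma rsum_le_length (u : nat -> R) (a b : nat) :
  (a <= b)%nat -> (forall i, 0 <= u i) -> rsum u a <= rsum u b.
Proof.
  intros Hab Hu; replace b with (a + (b - a))%nat by lia; rewrite rsum_add.
  assert (0 <= rsum (fun i => u (a + i)%nat) (b - a)) by (apply rsum_nonneg; auto); lra.
Qed.

Lemma csum_ext (u v : nat -> C) (n : nat) :
  (forall j, (j < n)%nat -> u j = v j) -> csum u n = csum v n.
Proof.
  induction n; simpl; intros H; [reflexivity|].
  f_equal; [apply IHn; intros; apply H|apply H]; lia.
Qed.

Lemma csum_RtoC (u : nat -> R) (n : nat) :
  csum (fun j => RtoC (u j)) n = RtoC (rsum u n).
Proof. induction n; simpl; [reflexivity|]; rewrite IHn; apply injective_projections; simpl; ring. Qed.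

Lemma csum_mult_l (c : C) (u : nat -> C) (n : nat) :
  Cmult c (csum u n) = csum (fun j => Cmult c (u j)) n.
Proof. induction n; simpl; [ring|]; rewrite <- IHn; ring. Qed.

Lemma csum_mult_r (c : C) (u : nat -> C) (n : nat) :
  Cmult (csum u n) c = csum (fun j => Cmult (u j) c) n.
Proof. induction n; simpl; [ring|]; rewrite <- IHn; ring. Qed.

Lemma Re_csum (u : nat -> C) (n : nat) : Re (csum u n) = rsum (fun j => Re (u j)) n.
Proof. induction n; simpl; [reflexivity|]; rewrite <- IHn; reflexivity. Qed.

Lemma Im_csum (u : nat -> C) (n : nat) : Im (csum u n) = rsum (fun j => Im (u j)) n.
Proof. induction n; simpl; [reflexivity|]; rewrite <- IHn; reflexivity. Qed.

Lemma sum_n_csum (u : nat -> C) (n : nat) : sum_n u n = csum u (S n).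
Proof.
  induction n; [rewrite sum_O; simpl; apply injective_projections; simpl; ring|].
  rewrite sum_Sn, IHn; reflexivity.
Qed.

Lemma im_le_Cmod (z : C) : Rabs (Im z) <= Cmod z.
Proof. eapply Rle_trans; [apply Rmax_r | apply Rmax_Cmod]. Qed.

Lemma Cmod_le_re_im (z : C) : Cmod z <= Rabs (Re z) + Rabs (Im z).
Proof.
  unfold Cmod; pose proof (Rabs_pos (Re z)); pose proof (Rabs_pos (Im z)).
  rewrite <- (sqrt_square (Rabs (Re z) + Rabs (Im z))) by lra.
  apply sqrt_le_1_alt.
  change (fst z) with (Re z); change (snd z) with (Im z).
  rewrite <- (pow2_abs (Re z)), <- (pow2_abs (Im z)); nra.
Qed.

Lemma ball_C_of_Cmod (x y : C) (e : R) :
  Cmod (Cminus y x) < e -> ball (M := C_R_CompleteNormedModule) x e y.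
Proof. apply C_NormedModule_mixin_compat1. Qed.

Lemma Cmod_of_ball_C (x y : C) (e : R) :
  ball (M := C_R_CompleteNormedModule) x e y -> Cmod (Cminus y x) < 2 * e.
Proof.
  intros [H1 H2]; change (Rabs (fst y - fst x) < e) in H1; change (Rabs (snd y - snd x) < e) in H2.
  eapply Rle_lt_trans; [apply Cmod_le_re_im | unfold Re, Im; simpl; unfold Rminus in *; lra].
Qed.

Definition is_derive_C (f : R -> C) (t : R) (d : C) : Prop :=
  is_derive (fun s => Re (f s)) t (Re d) /\ is_derive (fun s => Im (f s)) t (Im d).

Lemma is_derive_C_const (c : C) (t : R) : is_derive_C (fun _ => c) t (RtoC 0).
Proof. split; simpl; auto_derive; auto. Qed.

Lemma is_derive_C_RtoC (r : R -> R) (t d : R) :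
  is_derive r t d -> is_derive_C (fun s => RtoC (r s)) t (RtoC d).
Proof. intros H; split; [exact H | simpl; auto_derive; auto]. Qed.

Lemma is_derive_C_plus (f g : R -> C) (t : R) (df dg : C) :
  is_derive_C f t df -> is_derive_C g t dg ->
  is_derive_C (fun s => Cplus (f s) (g s)) t (Cplus df dg).
Proof.
  intros [F1 F2] [G1 G2]; split; simpl.
  - apply (is_derive_plus (fun s => Re (f s)) (fun s => Re (g s))); auto.
  - apply (is_derive_plus (fun s => Im (f s)) (fun s => Im (g s))); auto.
Qed.

Lemma is_derive_C_mult (f g : R -> C) (t : R) (df dg : C) :
  is_derive_C f t df -> is_derive_C g t dg ->
  is_derive_C (fun s => Cmult (f s) (g s)) t (Cplus (Cmult df (g t)) (Cmult (f t) dg)).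
Proof.
  intros [F1 F2] [G1 G2].
  assert (Hmul : forall (p q : R -> R) dp dq, is_derive p t dp -> is_derive q t dq ->
            is_derive (fun s => p s * q s) t (dp * q t + p t * dq))
    by (intros p q dp dq Hp Hq; exact (is_derive_mult p q t dp dq Hp Hq Rmult_comm)).
  split.
  - match goal with |- is_derive _ _ ?d => replace d with ((Re df * Re (g t) + Re (f t) * Re dg)
                         - (Im df * Im (g t) + Im (f t) * Im dg)) by (unfold Re, Im; simpl; ring) end.
    exact (is_derive_minus _ _ t _ _ (Hmul _ _ _ _ F1 G1) (Hmul _ _ _ _ F2 G2)).
  - match goal with |- is_derive _ _ ?d => replace d with ((Re df * Im (g t) + Re (f t) * Im dg)
                         + (Im df * Re (g t) + Im (f t) * Re dg)) by (unfold Re, Im; simpl; ring) end.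
    exact (is_derive_plus _ _ t _ _ (Hmul _ _ _ _ F1 G2) (Hmul _ _ _ _ F2 G1)).
Qed.

Lemma is_derive_C_mult_const (f : R -> C) (c : C) (t : R) (d : C) :
  is_derive_C f t d -> is_derive_C (fun s => Cmult (f s) c) t (Cmult d c).
Proof.
  intros H; pose proof (is_derive_C_mult f (fun _ => c) t d (RtoC 0) H (is_derive_C_const c t)) as D.
  replace (Cmult d c) with (Cplus (Cmult d c) (Cmult (f t) (RtoC 0))) by ring; exact D.
Qed.

Lemma is_derive_C_csum (u du : nat -> R -> C) (t : R) (n : nat) :
  (forall j, (j < n)%nat -> is_derive_C (u j) t (du j t)) ->
  is_derive_C (fun s => csum (fun j => u j s) n) t (csum (fun j => du j t) n).
Proof.
  induction n; simpl; intros H; [apply is_derive_C_const|].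
  apply is_derive_C_plus; [apply IHn; intros; apply H|apply H]; lia.
Qed.

Lemma Rabs_sub_le_of_derive (h dh : R -> R) (M : R) :
  (forall t, 0 <= t <= 1 -> is_derive h t (dh t)) ->
  (forall t, 0 <= t <= 1 -> Rabs (dh t) <= M) ->
  Rabs (h 1 - h 0) <= M.
Proof.
  intros D B.
  destruct (MVT_gen h 0 1 dh) as [c [Hc E]];
    rewrite ?Rmin_left, ?Rmax_right in * by lra.
  - intros s Hs; apply D; lra.
  - intros s Hs; apply continuity_pt_filterlim, (ex_derive_continuous h).
    eexists; apply D; lra.
  - rewrite E, Rminus_0_r, Rmult_1_r; apply B; lra.
Qed.

Lemma Cmod_sub_le_of_derive (h dh : R -> C) (M : R) :
  (forall t, 0 <= t <= 1 -> is_derive_C h t (dh t)) ->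
  (forall t, 0 <= t <= 1 -> Cmod (dh t) <= M) ->
  Cmod (Cminus (h 1) (h 0)) <= 2 * M.
Proof.
  intros D B.
  assert (Hre : Rabs (Re (h 1) - Re (h 0)) <= M).
  { apply (Rabs_sub_le_of_derive (fun s => Re (h s)) (fun s => Re (dh s))).
    - intros; apply D; auto.
    - intros; eapply Rle_trans; [apply re_le_Cmod | apply B; auto]. }
  assert (Him : Rabs (Im (h 1) - Im (h 0)) <= M).
  { apply (Rabs_sub_le_of_derive (fun s => Im (h s)) (fun s => Im (dh s))).
    - intros; apply D; auto.
    - intros; eapply Rle_trans; [apply im_le_Cmod | apply B; auto]. }
  eapply Rle_trans; [apply Cmod_le_re_im|].
  change (Rabs (Re (h 1) - Re (h 0)) + Rabs (Im (h 1) - Im (h 0)) <= 2 * M); lra.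
Qed.

(** * The binomial series *)

Definition binom_series (al : R) (n : nat) (w : C) : C :=
  csum (fun j => (gbinom al j * w ^ j)%C) (S n).

Lemma binom_series_0 (al : R) (w : C) : binom_series al 0 w = RtoC 1.
Proof. apply injective_projections; simpl; ring. Qed.

Lemma binom_series_S (al : R) (n : nat) (w : C) :
  binom_series al (S n) w = (binom_series al n w + gbinom al (S n) * w ^ S n)%C.
Proof. reflexivity. Qed.

Lemma ln_sqrt (x : R) : 0 < x -> ln (sqrt x) = ln x / 2.
Proof. intros Hx; rewrite <- Rpower_sqrt, ln_Rpower by auto; field. Qed.

Lemma Cpow_eq (z : C) (a : R) : Cmod z <> 0 ->
  Defs.Cpow z a = (exp (a * ln (Cmod z)) * cos (a * Arg z),
                   exp (a * ln (Cmod z)) * sin (a * Arg z)).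
Proof. intros H; unfold Defs.Cpow; destruct (Req_EM_T (Cmod z) 0); [contradiction | reflexivity]. Qed.

Lemma Arg_re_pos (z : C) : 0 < Re z -> Arg z = atan (Im z / Re z).
Proof. intros H; unfold Arg; destruct (Rlt_dec 0 (fst z)); [reflexivity | unfold Re in H; lra]. Qed.

(* On [0, 1], [H(t) = S_n(t w) (1 + t w)^(-al)] has [H(0) = 1] and
   [H(1) = S_n(w) (1 + w)^(-al)], where [S_n] is the truncated binomial series; since
   [(1 + z) S_n'(z) - al S_n(z) = O(z^n)], the derivative of [H] is [O(|w|^(n+1))]. *)
Section BinomialSeriesODE.
Variables (al : R) (w : C).
Hypothesis Hal : 0 < al < 1.
Hypothesis Hw : Cmod w < 1.

Definition ray (t : R) : C := (1 + t * w)%C.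

Let X (t : R) : R := 1 + t * Re w.
Let Y (t : R) : R := t * Im w.

Lemma ray_re_pos (t : R) : 0 <= t <= 1 -> 0 < X t.
Proof.
  intros Ht; pose proof (re_le_Cmod w) as Hre; unfold X.
  assert (- Re w <= Rabs (Re w)) by (rewrite <- Rabs_Ropp; apply Rle_abs).
  assert (0 <= t * (Rabs (Re w) + Re w)) by (apply Rmult_le_pos; lra).
  assert (0 <= (1 - t) * Rabs (Re w)) by (apply Rmult_le_pos; [lra | apply Rabs_pos]).
  nra.
Qed.

Let Q_pos (t : R) : 0 <= t <= 1 -> 0 < X t ^ 2 + Y t ^ 2.
Proof. intros Ht; pose proof (ray_re_pos t Ht); pose proof (pow2_ge_0 (Y t)); nra. Qed.

Lemma Cmod_ray_ge (t : R) : 0 <= t <= 1 -> 1 - Cmod w <= Cmod (ray t).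
Proof.
  intros Ht; pose proof (Cmod_triangle (ray t) (- (t * w))).
  replace (ray t + - (t * w))%C with (RtoC 1) in H by (unfold ray; ring).
  rewrite Cmod_1, Cmod_opp, Cmod_mult, Cmod_R, Rabs_right in H by lra.
  pose proof (Cmod_ge_0 w); nra.
Qed.

Lemma Cmod_ray_eq (t : R) : Cmod (ray t) = sqrt (X t ^ 2 + Y t ^ 2).
Proof. unfold Cmod, ray, X, Y, Re, Im; simpl; f_equal; ring. Qed.

(* The principal value of [(1 + t w)^(-al)], written so that it can be differentiated. *)
Definition ray_pow_neg (t : R) : C :=
  (exp (- al * (ln (X t ^ 2 + Y t ^ 2) / 2)) * cos (al * atan (Y t / X t)),
   - (exp (- al * (ln (X t ^ 2 + Y t ^ 2) / 2)) * sin (al * atan (Y t / X t)))).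

(* [w / (1 + t w)] *)
Definition ray_log_deriv (t : R) : C :=
  ((X t * Re w + Y t * Im w) / (X t ^ 2 + Y t ^ 2),
   (Im w * X t - Y t * Re w) / (X t ^ 2 + Y t ^ 2)).

Lemma ray_mult_log_deriv (t : R) : 0 <= t <= 1 -> (ray t * ray_log_deriv t)%C = w.
Proof.
  intros Ht; pose proof (Q_pos t Ht).
  unfold ray, ray_log_deriv, X, Y, Re, Im in *.
  apply injective_projections; simpl; field; lra.
Qed.

Lemma is_derive_C_ray_pow_neg (t : R) : 0 <= t <= 1 ->
  is_derive_C ray_pow_neg t (RtoC (- al) * (ray_log_deriv t * ray_pow_neg t))%C.
Proof.
  intros Ht; pose proof (ray_re_pos t Ht) as HX; pose proof (Q_pos t Ht) as HQ.
  unfold ray_pow_neg, ray_log_deriv, X, Y in *.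
  set (a := Re w) in *; set (b := Im w) in *.
  split; unfold Cmult, RtoC, Re, Im; cbn [fst snd];
    (auto_derive; [repeat split; auto; lra |]);
    set (x := 1 + t * a) in *; set (y := t * b) in *;
    replace (x * (x * 1) + y * (y * 1)) with (x ^ 2 + y ^ 2) by ring;
    set (E := exp (- al * (ln (x ^ 2 + y ^ 2) * / 2)));
    change (exp (- al * (ln (x ^ 2 + y ^ 2) / 2))) with E;
    set (c := cos (al * atan (y * / x))); change (cos (al * atan (y / x))) with c;
    set (s := sin (al * atan (y * / x))); change (sin (al * atan (y / x))) with s;
    simpl; field; lra.
Qed.

Lemma Cmod_ray_pow_neg (t : R) : 0 <= t <= 1 ->
  Cmod (ray_pow_neg t) = exp (- al * ln (Cmod (ray t))).
Proof.
  intros Ht; rewrite Cmod_ray_eq, ln_sqrt by (apply Q_pos; auto).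
  unfold ray_pow_neg, Cmod; simpl fst; simpl snd.
  set (e := exp _); set (a := al * atan _).
  replace ((e * cos a) ^ 2 + (- (e * sin a)) ^ 2) with (e ^ 2 * (sin a ^ 2 + cos a ^ 2)) by ring.
  pose proof (sin2_cos2 a) as Hsc; unfold Rsqr in Hsc.
  replace (sin a ^ 2 + cos a ^ 2) with 1 by (rewrite <- Hsc; ring).
  rewrite Rmult_1_r, sqrt_pow2 by (apply Rlt_le, exp_pos).
  unfold e; f_equal; unfold Rdiv; ring.
Qed.

Lemma ray_pow_neg_0 : ray_pow_neg 0 = RtoC 1.
Proof.
  unfold ray_pow_neg, X, Y; rewrite !Rmult_0_l, Rplus_0_r.
  replace (1 ^ 2 + 0 ^ 2) with 1 by ring; replace (0 / 1) with 0 by field.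
  rewrite ln_1, atan_0; replace (0 / 2) with 0 by field.
  rewrite !Rmult_0_r, exp_0, cos_0, sin_0; apply injective_projections; simpl; ring.
Qed.

Lemma ray_pow_neg_1_mult : (ray_pow_neg 1 * Defs.Cpow (1 + w) al)%C = RtoC 1.
Proof.
  assert (H1 : 0 <= 1 <= 1) by lra.
  pose proof (Cmod_ray_ge 1 H1); pose proof (ray_re_pos 1 H1) as HX.
  replace (1 + w)%C with (ray 1) by (unfold ray; ring).
  rewrite Cpow_eq by (apply Rgt_not_eq; lra).
  rewrite Arg_re_pos by (unfold ray, X, Re in *; simpl; lra).
  rewrite Cmod_ray_eq, ln_sqrt by (apply Q_pos; auto).
  unfold ray_pow_neg.
  replace (Im (ray 1) / Re (ray 1)) with (Y 1 / X 1) by (unfold ray, X, Y, Re, Im; simpl; f_equal; ring).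
  set (L := ln (X 1 ^ 2 + Y 1 ^ 2) / 2); set (A := al * atan (Y 1 / X 1)).
  assert (HE : exp (- al * L) * exp (al * L) = 1)
    by (rewrite <- exp_plus; replace (- al * L + al * L) with 0 by ring; apply exp_0).
  pose proof (sin2_cos2 A) as Hsc; unfold Rsqr in Hsc.
  apply injective_projections; simpl.
  - transitivity (exp (- al * L) * exp (al * L) * (sin A * sin A + cos A * cos A)); [ring|].
    rewrite HE, Hsc; ring.
  - ring.
Qed.

Definition trunc_series (n : nat) (t : R) : C :=
  csum (fun j => (RtoC (gbinom al j * t ^ j) * w ^ j)%C) (S n).

Definition trunc_series_deriv (n : nat) (t : R) : C :=
  csum (fun j => (RtoC (gbinom al j * (INR j * t ^ pred j)) * w ^ j)%C) (S n).

Lemma is_derive_C_trunc_series (n : nat) (t : R) :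
  is_derive_C (trunc_series n) t (trunc_series_deriv n t).
Proof.
  apply (is_derive_C_csum (fun j s => (RtoC (gbinom al j * s ^ j) * w ^ j)%C)
           (fun j s => (RtoC (gbinom al j * (INR j * s ^ pred j)) * w ^ j)%C)).
  intros j _; apply is_derive_C_mult_const, is_derive_C_RtoC; auto_derive; [exact I | ring].
Qed.

Lemma trunc_series_ode (n : nat) (t : R) :
  (ray t * trunc_series_deriv n t - al * w * trunc_series n t)%C
  = (RtoC (- (INR (S n) * gbinom al (S n) * t ^ n)) * w ^ S n)%C.
Proof.
  induction n as [|n IHn].
  - unfold trunc_series, trunc_series_deriv, ray; simpl.
    apply injective_projections; simpl; field.
  - unfold trunc_series, trunc_series_deriv in *.
    change (csum ?u (S (S n))) with (csum u (S n) + u (S n))%C.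
    transitivity ((ray t * csum (fun j => (RtoC (gbinom al j * (INR j * t ^ pred j)) * w ^ j)%C) (S n)
                   - al * w * csum (fun j => (RtoC (gbinom al j * t ^ j) * w ^ j)%C) (S n))
                  + (ray t * RtoC (gbinom al (S n) * (INR (S n) * t ^ n)) * w ^ S n
                     - al * w * RtoC (gbinom al (S n) * t ^ S n) * w ^ S n))%C; [simpl pred; ring|].
    rewrite IHn; change (gbinom al (S (S n))) with (gbinom al (S n) * (al - INR (S n)) / INR (S (S n))).
    change (w ^ S (S n))%C with (w * w ^ S n)%C.
    pose proof (INR_S_pos n); pose proof (S_INR (S n)).
    set (g := gbinom al (S n)); set (k1 := INR (S n)) in *; set (k2 := INR (S (S n))) in *.
    unfold ray; destruct (w ^ S n)%C as [p1 p2]; destruct w as [w1 w2]; simpl pow.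
    apply injective_projections; simpl; field; lra.
Qed.

Definition ray_transform (n : nat) (t : R) : C := (trunc_series n t * ray_pow_neg t)%C.

Definition ray_transform_deriv (n : nat) (t : R) : C :=
  (trunc_series_deriv n t * ray_pow_neg t
   + trunc_series n t * (RtoC (- al) * (ray_log_deriv t * ray_pow_neg t)))%C.

Lemma is_derive_C_ray_transform (n : nat) (t : R) : 0 <= t <= 1 ->
  is_derive_C (ray_transform n) t (ray_transform_deriv n t).
Proof.
  intros Ht; apply is_derive_C_mult;
    [apply is_derive_C_trunc_series | apply is_derive_C_ray_pow_neg, Ht].
Qed.

Lemma ray_mult_ray_transform_deriv (n : nat) (t : R) : 0 <= t <= 1 ->
  (ray t * ray_transform_deriv n t)%C
  = ((ray t * trunc_series_deriv n t - al * w * trunc_series n t) * ray_pow_neg t)%C.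
Proof.
  intros Ht; unfold ray_transform_deriv; rewrite RtoC_opp, <- (ray_mult_log_deriv t Ht); ring.
Qed.

Let m := 1 - Cmod w.

Lemma Cmod_ray_transform_deriv_le (n : nat) (t : R) : 0 <= t <= 1 ->
  Cmod (ray_transform_deriv n t) <= Cmod w ^ S n * (Rpower m (- al) / m).
Proof.
  intros Ht; pose proof (Cmod_ray_ge t Ht) as Hm; fold m in Hm.
  assert (Hm0 : 0 < m) by (unfold m; lra).
  assert (Hz : 0 < Cmod (ray t)) by lra.
  assert (E : Cmod (ray_transform_deriv n t)
              = Cmod ((ray t * trunc_series_deriv n t - al * w * trunc_series n t) * ray_pow_neg t)
                / Cmod (ray t)).
  { rewrite <- ray_mult_ray_transform_deriv, Cmod_mult by auto; field; lra. }
  rewrite E, trunc_series_ode, !Cmod_mult, Cmod_R, Rabs_Ropp, Cmod_pow, Cmod_ray_pow_neg by auto.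
  assert (Hc : Rabs (INR (S n) * gbinom al (S n) * t ^ n) <= 1).
  { pose proof (abs_gbinom_S_le_inv al Hal n); pose proof (INR_S_pos n).
    pose proof (pow_between_0_1 t n Ht).
    rewrite !Rabs_mult, (Rabs_right (INR _)), (Rabs_right (t ^ n)) by lra.
    assert (INR (S n) * Rabs (gbinom al (S n)) <= 1).
    { apply Rmult_le_reg_r with (/ INR (S n)); [apply Rinv_0_lt_compat; lra|].
      rewrite Rmult_comm, <- Rmult_assoc, Rinv_l, !Rmult_1_l by lra; auto. }
    pose proof (Rabs_pos (gbinom al (S n))); nra. }
  assert (He : exp (- al * ln (Cmod (ray t))) <= Rpower m (- al)).
  { unfold Rpower; apply exp_le_compat.
    assert (ln m <= ln (Cmod (ray t))) by (apply ln_le; auto); nra. }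
  pose proof (exp_pos (- al * ln (Cmod (ray t)))).
  pose proof (pow_le (Cmod w) (S n) (Cmod_ge_0 w)).
  pose proof (Rabs_pos (INR (S n) * gbinom al (S n) * t ^ n)).
  unfold Rdiv; apply Rle_trans with (Cmod w ^ S n * Rpower m (- al) * / Cmod (ray t)).
  - apply Rmult_le_compat_r; [apply Rlt_le, Rinv_0_lt_compat; auto|].
    rewrite Rmult_assoc.
    replace (Cmod w ^ S n * Rpower m (- al)) with (1 * (Cmod w ^ S n * Rpower m (- al))) by ring.
    apply Rmult_le_compat; auto; [apply Rmult_le_pos; lra | apply Rmult_le_compat_l; lra].
  - rewrite !Rmult_assoc; apply Rmult_le_compat_l; [lra|].
    apply Rmult_le_compat_l; [apply Rlt_le, Rpower_pos | apply Rinv_le_contravar; auto].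
Qed.

Lemma Cmod_binom_series_sub_le (n : nat) :
  Cmod (binom_series al n w - Defs.Cpow (1 + w) al)%C
  <= 2 * (Cmod w ^ S n * (Rpower m (- al) / m)) * Cmod (Defs.Cpow (1 + w) al).
Proof.
  set (G := Defs.Cpow (1 + w) al).
  assert (Hends : (binom_series al n w - G)%C = ((ray_transform n 1 - ray_transform n 0) * G)%C).
  { assert (H0 : trunc_series n 0 = RtoC 1).
    { unfold trunc_series; induction n; [apply injective_projections; simpl; ring|].
      change (csum ?u (S (S n))) with (csum u (S n) + u (S n))%C; rewrite IHn.
      apply injective_projections; simpl; ring. }
    assert (H1 : trunc_series n 1 = binom_series al n w)
      by (apply csum_ext; intros j _; rewrite pow1, Rmult_1_r; reflexivity).
    unfold ray_transform; rewrite H0, H1, ray_pow_neg_0.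
    transitivity (binom_series al n w * (ray_pow_neg 1 * G) - G)%C;
      [unfold G; rewrite ray_pow_neg_1_mult; ring | ring]. }
  rewrite Hends, Cmod_mult; apply Rmult_le_compat_r; [apply Cmod_ge_0|].
  apply Cmod_sub_le_of_derive with (dh := ray_transform_deriv n).
  - intros; apply is_derive_C_ray_transform; auto.
  - intros; apply Cmod_ray_transform_deriv_le; auto.
Qed.

End BinomialSeriesODE.

Section BinomialSeries.
Variable al : R.
Hypothesis Hal : 0 < al < 1.

Lemma Cmod_binom_series_sub_tail (n k : nat) (u : C) : Cmod u <= 1 ->
  Cmod (binom_series al (n + k) u - binom_series al n u)%C
  <= binom_tail al n - binom_tail al (n + k).
Proof.
  intros Hu; induction k as [|k IHk].
  - rewrite Nat.add_0_r; replace (binom_series al n u - binom_series al n u)%C with (RtoC 0) by ring.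
    rewrite Cmod_0; lra.
  - rewrite Nat.add_succ_r, binom_series_S.
    replace (binom_series al (n + k) u + gbinom al (S (n + k)) * u ^ S (n + k) - binom_series al n u)%C
      with ((binom_series al (n + k) u - binom_series al n u)
            + gbinom al (S (n + k)) * u ^ S (n + k))%C by ring.
    eapply Rle_trans; [apply Cmod_triangle|].
    rewrite Cmod_mult, Cmod_R, Cmod_pow, abs_gbinom_S by auto.
    pose proof (pow_between_0_1 (Cmod u) (S (n + k)) (conj (Cmod_ge_0 u) Hu)).
    pose proof (binom_tail_S_le al Hal (n + k)); nra.
Qed.

Lemma Cmod_binom_series_le_2 (n : nat) (u : C) : Cmod u <= 1 -> Cmod (binom_series al n u) <= 2.
Proof.
  intros Hu; pose proof (Cmod_binom_series_sub_tail 0 n u Hu) as H; rewrite Nat.add_0_l in H.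
  rewrite binom_series_0 in H.
  replace (binom_series al n u) with ((binom_series al n u - 1) + 1)%C by ring.
  eapply Rle_trans; [apply Cmod_triangle|]; rewrite Cmod_1.
  pose proof (binom_tail_pos al Hal n); change (binom_tail al 0) with 1 in H; lra.
Qed.

(* The remainder of the binomial series inside the unit disc is bounded by [binom_tail]:
   compare with [S_(n+k)], whose distance to [(1 + w)^al] decays geometrically in [k]. *)
Lemma binom_series_approx (n : nat) (w : C) : Cmod w < 1 ->
  Cmod (Defs.Cpow (1 + w) al - binom_series al n w)%C <= binom_tail al n.
Proof.
  intros Hw; apply Rle_plus_epsilon; intros e He.
  set (G := Defs.Cpow (1 + w) al).
  set (K := 2 * (Rpower (1 - Cmod w) (- al) / (1 - Cmod w)) * Cmod G + 1).
  assert (HK : 0 < K).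
  { unfold K; pose proof (Cmod_ge_0 G).
    assert (0 < Rpower (1 - Cmod w) (- al) / (1 - Cmod w))
      by (apply Rdiv_lt_0_compat; [apply Rpower_pos | lra]).
    nra. }
  destruct (pow_lt_1_zero (Cmod w)) with (y := e / K) as [k Hk];
    [rewrite Rabs_right by (apply Rle_ge, Cmod_ge_0); auto | apply Rdiv_lt_0_compat; auto |].
  specialize (Hk (S (n + k)) ltac:(lia)).
  rewrite Rabs_right in Hk by (apply Rle_ge, pow_le, Cmod_ge_0).
  pose proof (Cmod_binom_series_sub_le al w Hal Hw (n + k)) as Hfar; fold G in Hfar.
  pose proof (Cmod_binom_series_sub_tail n k w (Rlt_le _ _ Hw)) as Htail.
  pose proof (binom_tail_pos al Hal (n + k)).
  assert (Hsmall : 2 * (Cmod w ^ S (n + k) * (Rpower (1 - Cmod w) (- al) / (1 - Cmod w))) * Cmod G <= e).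
  { apply Rmult_lt_compat_r with (r := K) in Hk; [|auto].
    unfold Rdiv in Hk; rewrite Rmult_assoc, Rinv_l, Rmult_1_r in Hk by lra.
    unfold K in Hk; pose proof (pow_le (Cmod w) (S (n + k)) (Cmod_ge_0 _)); nra. }
  replace (G - binom_series al n w)%C
    with (- (binom_series al (n + k) w - G) + (binom_series al (n + k) w - binom_series al n w))%C
    by ring.
  eapply Rle_trans; [apply Cmod_triangle|]; rewrite Cmod_opp; lra.
Qed.

Lemma Cmod_Cpow_1_plus_le_2 (w : C) : Cmod w < 1 -> Cmod (Defs.Cpow (1 + w) al) <= 2.
Proof.
  intros Hw; pose proof (binom_series_approx 0 w Hw) as H.
  rewrite binom_series_0 in H; change (binom_tail al 0) with 1 in H.
  replace (Defs.Cpow (1 + w) al) with ((Defs.Cpow (1 + w) al - 1) + 1)%C by ring.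
  eapply Rle_trans; [apply Cmod_triangle|]; rewrite Cmod_1; lra.
Qed.

Lemma Bernoulli_ineq (r : R) (k : nat) : 0 <= r <= 1 -> 1 - r ^ k <= INR k * (1 - r).
Proof.
  intros Hr; induction k; [simpl; lra|].
  rewrite S_INR; simpl pow; pose proof (pow_between_0_1 r k Hr); nra.
Qed.

Lemma Cmod_binom_series_radial (n : nat) (u : C) (r : R) : Cmod u <= 1 -> 0 <= r <= 1 ->
  Cmod (binom_series al n (r * u) - binom_series al n u)%C <= INR n * INR (S n) * (1 - r).
Proof.
  intros Hu Hr; induction n as [|n IHn].
  - rewrite !binom_series_0; replace (RtoC 1 - RtoC 1)%C with (RtoC 0) by ring.
    rewrite Cmod_0; simpl; lra.
  - rewrite !binom_series_S, Cpow_mult_l, <- RtoC_pow.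
    replace (binom_series al n (r * u) + gbinom al (S n) * (RtoC (r ^ S n) * u ^ S n)
             - (binom_series al n u + gbinom al (S n) * u ^ S n))%C
      with ((binom_series al n (r * u) - binom_series al n u)
            + RtoC (gbinom al (S n) * (r ^ S n - 1)) * u ^ S n)%C
      by (destruct (u ^ S n)%C; apply injective_projections; simpl; ring).
    eapply Rle_trans; [apply Cmod_triangle|].
    rewrite Cmod_mult, Cmod_R, Cmod_pow, Rabs_mult.
    pose proof (abs_gbinom_le_1 al Hal (S n)); pose proof (Rabs_pos (gbinom al (S n))).
    pose proof (pow_between_0_1 (Cmod u) (S n) (conj (Cmod_ge_0 u) Hu)).
    pose proof (pow_between_0_1 r (S n) Hr); pose proof (Bernoulli_ineq r (S n) Hr).
    rewrite (Rabs_left1 (r ^ S n - 1)) by lra.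
    assert (Rabs (gbinom al (S n)) * - (r ^ S n - 1) * Cmod u ^ S n <= INR (S n) * (1 - r)).
    { apply Rle_trans with (1 * - (r ^ S n - 1) * 1); [|lra].
      apply Rmult_le_compat; [apply Rmult_le_pos; lra | lra | apply Rmult_le_compat_r; lra | lra]. }
    rewrite !S_INR in *; pose proof (pos_INR n); nra.
Qed.

End BinomialSeries.

Lemma near_1_left_small (B e : R) : 0 <= B -> 0 < e ->
  exists d : posreal, forall r, Rabs (r - 1) < d -> r < 1 -> 0 <= r /\ B * (1 - r) < e.
Proof.
  intros HB He.
  assert (Hd : 0 < Rmin (1 / 2) (e / (B + 1)))
    by (apply Rmin_pos; [lra | apply Rdiv_lt_0_compat; lra]).
  exists (mkposreal _ Hd); intros r Hr Hr1; simpl in Hr.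
  pose proof (Rmin_l (1 / 2) (e / (B + 1))); pose proof (Rmin_r (1 / 2) (e / (B + 1))).
  assert (H1r : 1 - r < e / (B + 1)) by (unfold Rabs in Hr; destruct Rcase_abs; lra).
  split; [unfold Rabs in Hr; destruct Rcase_abs; lra|].
  apply Rmult_lt_compat_l with (r := B + 1) in H1r; [|lra].
  replace ((B + 1) * (e / (B + 1))) with e in H1r by (field; lra); nra.
Qed.

Lemma Cmod_lim_at_left_1_sub_le (g : R -> C) (P : nat -> C) (A B : nat -> R) :
  (forall n, 0 <= B n) ->
  (forall n r, 0 <= r < 1 -> Cmod (g r - P n)%C <= A n + B n * (1 - r)) ->
  (forall e, 0 < e -> exists n, A n < e) ->
  forall n, Cmod (@lim C_R_CompleteNormedModule (filtermap g (at_left 1)) - P n)%C <= A n.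
Proof.
  intros HB Happrox Hvan n.
  set (F := filtermap g (at_left 1)).
  assert (PF : ProperFilter F) by (apply filtermap_proper_filter, at_left_proper_filter).
  assert (CF : cauchy (T := C_R_CompleteNormedModule) F).
  { intros [eps Heps]; destruct (Hvan (eps / 2)) as [k Hk]; [lra|].
    destruct (near_1_left_small (B k) (eps / 2) (HB k)) as [d Hd]; [lra|].
    exists (P k), d; intros r Hr Hr1; destruct (Hd r Hr Hr1) as [Hr0 HBr].
    apply ball_C_of_Cmod; simpl.
    eapply Rle_lt_trans; [apply Happrox; lra | lra]. }
  apply Rle_plus_epsilon; intros e He.
  destruct (@complete_cauchy C_R_CompleteNormedModule F PF CF (mkposreal (e / 4) ltac:(lra))) as [d Hd].
  destruct (near_1_left_small (B n) (e / 2) (HB n)) as [d' Hd']; [lra|].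
  set (eta := Rmin (d / 2) (d' / 2)).
  assert (Heta : 0 < eta) by (apply Rmin_pos; [pose proof (cond_pos d) | pose proof (cond_pos d')]; lra).
  assert (Hball : forall (d0 : posreal), eta <= d0 / 2 -> Rabs (1 - eta - 1) < d0).
  { intros d0 H0; rewrite Rabs_left by lra; pose proof (cond_pos d0); lra. }
  destruct (Hd' (1 - eta) (Hball d' (Rmin_r _ _)) ltac:(lra)) as [Hr0 HBr].
  specialize (Hd (1 - eta) (Hball d (Rmin_l _ _)) ltac:(lra)); simpl in Hd.
  apply Cmod_of_ball_C in Hd.
  pose proof (Happrox n (1 - eta) ltac:(lra)) as Hr.
  set (L := @lim C_R_CompleteNormedModule F) in *.
  replace (L - P n)%C with (- (g (1 - eta)%R - L) + (g (1 - eta)%R - P n))%C by ring.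
  eapply Rle_trans; [apply Cmod_triangle|]; rewrite Cmod_opp; lra.
Qed.

(** * The symbol [phi] and its Fourier coefficients *)

Definition phi_approx (al : R) (n : nat) (t : R) : C :=
  (binom_series al n (- Cexpi t) * binom_series al n (Cexpi (- t)))%C.

Lemma Cmod_Cexpi (t : R) : Cmod (Cexpi t) = 1.
Proof.
  unfold Cmod, Cexpi; simpl fst; simpl snd; rewrite <- sqrt_1; f_equal.
  pose proof (sin2_cos2 t) as H; unfold Rsqr in H; rewrite <- H; ring.
Qed.

Lemma Cexpi_plus (a b : R) : (Cexpi a * Cexpi b)%C = Cexpi (a + b).
Proof. unfold Cexpi; rewrite cos_plus, sin_plus; apply injective_projections; simpl; ring. Qed.

Section Phi.
Variable al : R.
Hypothesis Hal : 0 < al < 1.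

Lemma Cmod_phiR_sub_phi_approx (n : nat) (r t : R) : 0 <= r < 1 ->
  Cmod (phiR al r t - phi_approx al n t)%C
  <= 4 * binom_tail al n + 4 * (INR n * INR (S n)) * (1 - r).
Proof.
  intros Hr.
  set (u1 := (- Cexpi t)%C); set (u2 := Cexpi (- t)).
  assert (Hu1 : Cmod u1 = 1) by (unfold u1; rewrite Cmod_opp; apply Cmod_Cexpi).
  assert (Hu2 : Cmod u2 = 1) by apply Cmod_Cexpi.
  assert (Hv : forall u, Cmod u = 1 -> Cmod (r * u)%C < 1)
    by (intros u Hu; rewrite Cmod_mult, Cmod_R, Hu, Rabs_right; lra).
  replace (phiR al r t) with (Defs.Cpow (1 + r * u1) al * Defs.Cpow (1 + r * u2) al)%C
    by (unfold phiR, u1, u2; f_equal; f_equal; ring).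
  unfold phi_approx; fold u1 u2.
  set (G1 := Defs.Cpow (1 + r * u1) al); set (G2 := Defs.Cpow (1 + r * u2) al).
  set (S1 := binom_series al n (r * u1)); set (S2 := binom_series al n (r * u2)).
  set (T1 := binom_series al n u1); set (T2 := binom_series al n u2).
  set (d := INR n * INR (S n) * (1 - r)).
  pose proof (binom_series_approx al Hal n _ (Hv u1 Hu1)) as A1.
  pose proof (binom_series_approx al Hal n _ (Hv u2 Hu2)) as A2.
  pose proof (Cmod_Cpow_1_plus_le_2 al Hal _ (Hv u2 Hu2)) as B2.
  pose proof (Cmod_binom_series_le_2 al Hal n _ (Rlt_le _ _ (Hv u1 Hu1))) as B1.
  pose proof (Cmod_binom_series_le_2 al Hal n u1 (Req_le _ _ Hu1)) as C1.
  pose proof (Cmod_binom_series_le_2 al Hal n _ (Rlt_le _ _ (Hv u2 Hu2))) as C2.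
  pose proof (Cmod_binom_series_radial al Hal n u1 r (Req_le _ _ Hu1) ltac:(lra)) as D1.
  pose proof (Cmod_binom_series_radial al Hal n u2 r (Req_le _ _ Hu2) ltac:(lra)) as D2.
  fold G1 G2 S1 S2 T1 T2 d in A1, A2, B1, B2, C1, C2, D1, D2.
  replace (G1 * G2 - T1 * T2)%C
    with (((G1 - S1) * G2 + S1 * (G2 - S2)) + ((S1 - T1) * S2 + T1 * (S2 - T2)))%C by ring.
  pose proof (Cmod_ge_0 (G1 - S1)); pose proof (Cmod_ge_0 (G2 - S2)).
  pose proof (Cmod_ge_0 (S1 - T1)); pose proof (Cmod_ge_0 (S2 - T2)).
  pose proof (Cmod_ge_0 G2); pose proof (Cmod_ge_0 S1).
  pose proof (Cmod_ge_0 S2); pose proof (Cmod_ge_0 T1).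
  eapply Rle_trans; [apply Cmod_triangle|].
  eapply Rle_trans; [apply Rplus_le_compat; apply Cmod_triangle|].
  rewrite !Cmod_mult.
  assert (Cmod (G1 - S1) * Cmod G2 <= binom_tail al n * 2) by (apply Rmult_le_compat; auto).
  assert (Cmod S1 * Cmod (G2 - S2) <= 2 * binom_tail al n) by (apply Rmult_le_compat; auto).
  assert (Cmod (S1 - T1) * Cmod S2 <= d * 2) by (apply Rmult_le_compat; auto).
  assert (Cmod T1 * Cmod (S2 - T2) <= 2 * d) by (apply Rmult_le_compat; auto).
  unfold d in *; lra.
Qed.

Lemma Cmod_phi_sub_phi_approx (n : nat) (t : R) :
  Cmod (phi al t - phi_approx al n t)%C <= 4 * binom_tail al n.
Proof.
  apply (Cmod_lim_at_left_1_sub_le (fun r => phiR al r t) (fun k => phi_approx al k t)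
           (fun k => 4 * binom_tail al k) (fun k => 4 * (INR k * INR (S k)))).
  - intros k; pose proof (pos_INR k); pose proof (INR_S_pos k); nra.
  - intros k r Hr; apply Cmod_phiR_sub_phi_approx, Hr.
  - intros e He; destruct (binom_tail_vanishes al Hal (e / 4)) as [k Hk]; [lra|].
    exists k; lra.
Qed.

End Phi.

Lemma is_RInt_cos_Z (z : Z) :
  is_RInt (fun x => cos (IZR z * x)) (- PI) PI (if (z =? 0)%Z then 2 * PI else 0).
Proof.
  destruct (Z.eqb_spec z 0) as [->|Hz].
  - apply (is_RInt_ext (fun _ => 1)); [intros x _; rewrite Rmult_0_l, cos_0; reflexivity|].
    replace (2 * PI) with (scal (PI - - PI) 1) by (unfold scal; simpl; unfold mult; simpl; ring).
    apply (is_RInt_const (V := R_NormedModule)).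
  - assert (Hz' : IZR z <> 0) by (intro h; apply Hz, eq_IZR, h).
    replace 0 with (minus (sin (IZR z * PI) / IZR z) (sin (IZR z * - PI) / IZR z)).
    + apply (is_RInt_derive (fun x => sin (IZR z * x) / IZR z)).
      * intros x _; auto_derive; [exact I | field; exact Hz'].
      * intros x _; apply (ex_derive_continuous (fun y => cos (IZR z * y))); auto_derive; exact I.
    + rewrite <- Ropp_mult_distr_r, sin_neg, sin_eq_0_1 by (exists z; reflexivity).
      unfold minus, plus, opp; simpl; field; exact Hz'.
Qed.

Lemma is_RInt_sin_Z (z : Z) : is_RInt (fun x => sin (IZR z * x)) (- PI) PI 0.
Proof.
  destruct (Z.eqb_spec z 0) as [->|Hz].
  - apply (is_RInt_ext (fun _ => 0)); [intros x _; rewrite Rmult_0_l, sin_0; reflexivity|].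
    pose proof (is_RInt_const (V := R_NormedModule) (- PI) PI 0) as H.
    change (scal (PI - - PI) 0) with ((PI - - PI) * 0) in H; rewrite Rmult_0_r in H; exact H.
  - assert (Hz' : IZR z <> 0) by (intro h; apply Hz, eq_IZR, h).
    replace 0 with (minus (- cos (IZR z * PI) / IZR z) (- cos (IZR z * - PI) / IZR z)).
    + apply (is_RInt_derive (fun x => - cos (IZR z * x) / IZR z)).
      * intros x _; auto_derive; [exact I | field; exact Hz'].
      * intros x _; apply (ex_derive_continuous (fun y => sin (IZR z * y))); auto_derive; exact I.
    + rewrite <- Ropp_mult_distr_r, cos_neg.
      unfold minus, plus, opp; simpl; field; exact Hz'.
Qed.

Lemma is_RInt_Cexpi_Z (c : R) (z : Z) :
  is_RInt (fun x => (RtoC c * Cexpi (IZR z * x))%C) (- PI) PI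
    (RtoC (if (z =? 0)%Z then 2 * PI * c else 0)).
Proof.
  apply is_RInt_fct_extend_pair.
  - match goal with |- is_RInt _ _ _ ?v =>
      replace v with (scal c (if (z =? 0)%Z then 2 * PI else 0))
        by (destruct (z =? 0)%Z; unfold scal; simpl; unfold mult; simpl; ring) end.
    eapply is_RInt_ext; [|apply (is_RInt_scal (V := R_NormedModule)), is_RInt_cos_Z].
    intros x _; unfold scal; simpl; unfold mult; simpl; ring.
  - match goal with |- is_RInt _ _ _ ?v =>
      replace v with (scal c 0) by (unfold scal; simpl; unfold mult; simpl; ring) end.
    eapply is_RInt_ext; [|apply (is_RInt_scal (V := R_NormedModule)), (is_RInt_sin_Z z)].
    intros x _; unfold scal; simpl; unfold mult; simpl; ring.
Qed.

Lemma is_RInt_csum (u : nat -> R -> C) (I : nat -> C) (a b : R) (n : nat) :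
  (forall j, (j < n)%nat -> is_RInt (u j) a b (I j)) ->
  is_RInt (fun x => csum (fun j => u j x) n) a b (csum I n).
Proof.
  induction n as [|n IHn]; intros H; simpl.
  - pose proof (is_RInt_const (V := C_R_NormedModule) a b (RtoC 0)) as H0.
    match type of H0 with is_RInt _ _ _ ?v => replace v with (RtoC 0) in H0
      by (apply injective_projections; simpl; symmetry; apply Rmult_0_r) end.
    exact H0.
  - apply (is_RInt_plus (fun x => csum (fun j => u j x) n) (u n));
      [apply IHn; intros; apply H | apply H]; lia.
Qed.

Lemma Cpow_Cexpi (t : R) (j : nat) : (Cexpi t ^ j)%C = Cexpi (INR j * t).
Proof.
  induction j as [|j IHj].
  - simpl; rewrite Rmult_0_l; unfold Cexpi; rewrite cos_0, sin_0; reflexivity.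
  - rewrite Cpow_S, IHj, Cexpi_plus, S_INR; f_equal; ring.
Qed.

Definition gbinom_upto (al : R) (n j : nat) : R := if (j <=? n)%nat then gbinom al j else 0.

(* The [(-l)]-th Fourier coefficient of [phi_approx al n]. *)
Definition fourier_approx (al : R) (n l : nat) : R :=
  rsum (fun m => gbinom al m * (-1) ^ m * gbinom_upto al n (m + l)) (S n).

Section FourierCoefficients.
Variable al : R.
Hypothesis Hal : 0 < al < 1.

Lemma phi_approx_mult_Cexpi (n l : nat) (t : R) :
  (phi_approx al n t * Cexpi (- (IZR (Z.of_nat 0 - Z.of_nat l) * t)))%C =
  csum (fun m => csum (fun j => (RtoC (gbinom al m * (-1) ^ m * gbinom al j)
        * Cexpi (IZR (Z.of_nat m - Z.of_nat j + Z.of_nat l) * t))%C) (S n)) (S n).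
Proof.
  unfold phi_approx, binom_series; rewrite !csum_mult_r; apply csum_ext; intros m _.
  rewrite csum_mult_l, csum_mult_r; apply csum_ext; intros j _.
  replace (- Cexpi t)%C with (RtoC (-1) * Cexpi t)%C by (apply injective_projections; simpl; ring).
  rewrite Cpow_mult_l, !Cpow_Cexpi, <- RtoC_pow.
  rewrite plus_IZR, !minus_IZR, <- !INR_IZR_INZ.
  replace ((INR m - INR j + INR l) * t)
    with (INR m * t + (INR j * - t + - ((INR 0 - INR l) * t))) by (simpl; ring).
  rewrite <- !Cexpi_plus.
  destruct (Cexpi (INR m * t)) as [a b]; destruct (Cexpi (INR j * - t)) as [c d].
  destruct (Cexpi (- ((INR 0 - INR l) * t))) as [e f].
  apply injective_projections; simpl; ring.
Qed.

Lemma rsum_kronecker (A : R) (m l k : nat) :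
  rsum (fun j => if (Z.of_nat m - Z.of_nat j + Z.of_nat l =? 0)%Z
                 then 2 * PI * (A * gbinom al j) else 0) k
  = if (m + l <? k)%nat then 2 * PI * (A * gbinom al (m + l)) else 0.
Proof.
  induction k as [|k IHk]; simpl rsum.
  - destruct (Nat.ltb_spec (m + l) 0); [lia | reflexivity].
  - rewrite IHk.
    destruct (Z.eqb_spec (Z.of_nat m - Z.of_nat k + Z.of_nat l) 0);
      destruct (Nat.ltb_spec (m + l) k); destruct (Nat.ltb_spec (m + l) (S k));
      try lia; try ring.
    replace k with (m + l)%nat by lia; ring.
Qed.

Lemma is_RInt_phi_approx (n l : nat) :
  is_RInt (fun t => (phi_approx al n t * Cexpi (- (IZR (Z.of_nat 0 - Z.of_nat l) * t)))%C)
    (- PI) PI (RtoC (2 * PI * fourier_approx al n l)).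
Proof.
  eapply is_RInt_ext; [intros t _; symmetry; apply phi_approx_mult_Cexpi|].
  replace (RtoC (2 * PI * fourier_approx al n l))
    with (csum (fun m => csum (fun j => RtoC
            (if (Z.of_nat m - Z.of_nat j + Z.of_nat l =? 0)%Z
             then 2 * PI * (gbinom al m * (-1) ^ m * gbinom al j) else 0)) (S n)) (S n)).
  - apply is_RInt_csum; intros m _; apply is_RInt_csum; intros j _.
    eapply is_RInt_ext; [|apply is_RInt_Cexpi_Z]; intros; reflexivity.
  - unfold fourier_approx; rewrite <- rsum_scal, <- csum_RtoC.
    apply csum_ext; intros m _; rewrite csum_RtoC, rsum_kronecker; f_equal.
    unfold gbinom_upto.
    destruct (Nat.ltb_spec (m + l) (S n)); destruct (Nat.leb_spec (m + l) n); try lia; ring.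
Qed.

Lemma fourier_approx_converges (l : nat) (e : R) : 0 < e ->
  exists N, forall n, (N <= n)%nat ->
    Cmod (toeplitz (phi al) 0 l - RtoC (fourier_approx al n l))%C < e.
Proof.
  intros He.
  set (s := (Z.of_nat 0 - Z.of_nat l)%Z).
  set (g := fun t => (phi al t * Cexpi (- (IZR s * t)))%C).
  set (f := fun n t => (phi_approx al n t * Cexpi (- (IZR s * t)))%C).
  destruct (filterlim_RInt (V := C_R_CompleteNormedModule) f (- PI) PI eventually eventually_filter
              g (fun n => RtoC (2 * PI * fourier_approx al n l))) as [If [Hlim HI]].
  - intros n; apply is_RInt_phi_approx.
  - intros P [eps HP]; destruct (binom_tail_vanishes al Hal (eps / 8)) as [N HN];
      [destruct eps; simpl; lra|].
    exists N; intros n Hn; apply HP; intros t; apply ball_C_of_Cmod; unfold f, g.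
    replace (phi_approx al n t * Cexpi (- (IZR s * t)) - phi al t * Cexpi (- (IZR s * t)))%C
      with (- (phi al t - phi_approx al n t) * Cexpi (- (IZR s * t)))%C by ring.
    rewrite Cmod_mult, Cmod_Cexpi, Cmod_opp, Rmult_1_r.
    eapply Rle_lt_trans; [apply Cmod_phi_sub_phi_approx; auto|].
    pose proof (binom_tail_add_le al Hal N (n - N)) as Hmono.
    replace (N + (n - N))%nat with n in Hmono by lia.
    destruct eps; simpl in *; lra.
  - assert (HPI : 0 < PI) by apply PI_RGT_0.
    destruct (Hlim (ball (M := C_R_CompleteNormedModule) If (PI * e))) as [N HN];
      [exists (mkposreal _ (Rmult_lt_0_compat _ _ HPI He)); auto|].
    exists N; intros n Hn; specialize (HN n Hn); apply Cmod_of_ball_C in HN.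
    unfold toeplitz, fourier; fold s.
    replace (RInt _ (- PI) PI) with If by (symmetry; apply is_RInt_unique; exact HI).
    replace (RtoC (/ (2 * PI)) * If - RtoC (fourier_approx al n l))%C
      with (RtoC (/ (2 * PI)) * - (RtoC (2 * PI * fourier_approx al n l) - If))%C
      by (destruct If; apply injective_projections; simpl; field; lra).
    rewrite Cmod_mult, Cmod_opp, Cmod_R, Rabs_right
      by (apply Rle_ge, Rlt_le, Rinv_0_lt_compat; lra).
    apply Rmult_lt_reg_l with (2 * PI); [lra|].
    rewrite <- Rmult_assoc, Rinv_r, Rmult_1_l by lra; lra.
Qed.

End FourierCoefficients.

Definition phi_coeff (al : R) (l : nat) : C := toeplitz (phi al) 0 l.

Section CoefficientBounds.
Variable al : R.
Hypothesis Hal : 0 < al < 1.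

Lemma rsum_abs_gbinom (n : nat) :
  rsum (fun m => Rabs (gbinom al m)) (S n) = 2 - binom_tail al n.
Proof.
  induction n as [|n IHn]; [simpl; rewrite Rabs_R1; lra|].
  change (rsum (fun m => Rabs (gbinom al m)) (S (S n)))
    with (rsum (fun m => Rabs (gbinom al m)) (S n) + Rabs (gbinom al (S n))).
  rewrite IHn, abs_gbinom_S by auto; ring.
Qed.

Lemma Rabs_rsum_gbinom_alt_le (v : nat -> R) (V : R) (n : nat) :
  (forall m, (m <= n)%nat -> Rabs (v m) <= V) ->
  Rabs (rsum (fun m => gbinom al m * (-1) ^ m * v m) (S n)) <= 2 * V.
Proof.
  intros Hv; assert (HV : 0 <= V) by (eapply Rle_trans; [apply Rabs_pos | apply (Hv 0%nat); lia]).
  eapply Rle_trans; [apply Rabs_rsum_le|].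
  apply Rle_trans with (rsum (fun m => V * Rabs (gbinom al m)) (S n)).
  - apply rsum_le; intros m Hm; rewrite !Rabs_mult, pow_1_abs, Rmult_1_r, Rmult_comm.
    apply Rmult_le_compat_r; [apply Rabs_pos | apply Hv; lia].
  - rewrite rsum_scal, rsum_abs_gbinom; pose proof (binom_tail_pos al Hal n); nra.
Qed.

Lemma Rabs_gbinom_upto_le (n j : nat) : Rabs (gbinom_upto al n j) <= Rabs (gbinom al j).
Proof. unfold gbinom_upto; destruct (j <=? n)%nat; [lra | rewrite Rabs_R0; apply Rabs_pos]. Qed.

Lemma Rabs_fourier_approx_S_le (n l : nat) :
  Rabs (fourier_approx al n (S l)) <= 2 * (al * Rpower (INR (S l)) (-1 - al)).
Proof.
  apply Rabs_rsum_gbinom_alt_le; intros m _.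
  eapply Rle_trans; [apply Rabs_gbinom_upto_le|].
  apply Rle_trans with (Rabs (gbinom al (S l)));
    [apply abs_gbinom_le; auto; lia | apply abs_gbinom_S_le_Rpower; auto].
Qed.

(* Pascal's rule turns the sum of two consecutive coefficients into [gbinom (al + 1)],
   which decays like [j^(-2)]; the cut-off at [n] costs at most [1/n]. *)
Lemma Rabs_gbinom_upto_pair_le (n j : nat) : (1 <= n)%nat ->
  Rabs (gbinom_upto al n (S j) + gbinom_upto al n (S (S j)))
  <= 2 / (INR (S j) * INR (S (S j))) + / INR n.
Proof.
  intros Hn; pose proof (INR_S_pos j); pose proof (INR_S_pos (S j)).
  assert (0 <= 2 / (INR (S j) * INR (S (S j)))) by (apply Rlt_le, Rdiv_lt_0_compat; nra).
  assert (0 < / INR n) by (apply Rinv_0_lt_compat, lt_0_INR; lia).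
  unfold gbinom_upto; destruct (Nat.leb_spec (S j) n); destruct (Nat.leb_spec (S (S j)) n).
  - rewrite <- gbinom_pascal; pose proof (abs_gbinom_SS_le (al + 1) j ltac:(lra)); lra.
  - replace n with (S j) by lia; rewrite Rplus_0_r.
    pose proof (abs_gbinom_S_le_inv al Hal j); lra.
  - lia.
  - rewrite Rplus_0_r, Rabs_R0; lra.
Qed.

Lemma Rabs_fourier_approx_pair_le (n l : nat) : (1 <= n)%nat ->
  Rabs (fourier_approx al n (S l) + fourier_approx al n (S (S l)))
  <= 2 * (2 / (INR (S l) * INR (S (S l))) + / INR n).
Proof.
  intros Hn; unfold fourier_approx; rewrite <- rsum_plus.
  erewrite rsum_ext by (intros m _; rewrite <- Rmult_plus_distr_l; reflexivity).
  apply Rabs_rsum_gbinom_alt_le; intros m _.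
  replace (m + S (S l))%nat with (S (S (m + l))) by lia.
  replace (m + S l)%nat with (S (m + l)) by lia.
  eapply Rle_trans; [apply Rabs_gbinom_upto_pair_le; auto|].
  apply Rplus_le_compat_r.
  pose proof (INR_S_pos l); pose proof (INR_S_pos (S l)).
  assert (INR (S l) <= INR (S (m + l))) by (apply le_INR; lia).
  assert (INR (S (S l)) <= INR (S (S (m + l)))) by (apply le_INR; lia).
  unfold Rdiv; apply Rmult_le_compat_l; [lra|].
  apply Rinv_le_contravar; [nra | apply Rmult_le_compat; lra].
Qed.

Lemma Cmod_phi_coeff_S_le (l : nat) :
  Cmod (phi_coeff al (S l)) <= 2 * al * Rpower (INR (S l)) (-1 - al).
Proof.
  apply Rle_plus_epsilon; intros e He.
  destruct (fourier_approx_converges al Hal (S l) e He) as [N HN].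
  specialize (HN N (le_n N)); pose proof (Rabs_fourier_approx_S_le N l).
  replace (phi_coeff al (S l))
    with ((phi_coeff al (S l) - RtoC (fourier_approx al N (S l))) + RtoC (fourier_approx al N (S l)))%C
    by ring.
  eapply Rle_trans; [apply Cmod_triangle|]; rewrite Cmod_R; unfold phi_coeff in *; lra.
Qed.

Lemma Cmod_phi_coeff_pair_le (l : nat) :
  Cmod (phi_coeff al (S l) + phi_coeff al (S (S l)))%C <= 4 / (INR (S l) * INR (S (S l))).
Proof.
  apply Rle_plus_epsilon; intros e He.
  destruct (fourier_approx_converges al Hal (S l) (e / 3)) as [N1 HN1]; [lra|].
  destruct (fourier_approx_converges al Hal (S (S l)) (e / 3)) as [N2 HN2]; [lra|].
  destruct (exists_nat_gt (6 / e)) as [N3 HN3].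
  set (n := (S N1 + N2 + N3)%nat).
  specialize (HN1 n ltac:(unfold n; lia)); specialize (HN2 n ltac:(unfold n; lia)).
  pose proof (Rabs_fourier_approx_pair_le n l ltac:(unfold n; lia)).
  assert (Hn : 2 * / INR n <= e / 3).
  { assert (INR N3 <= INR n) by (apply le_INR; unfold n; lia).
    assert (0 < 6 / e) by (apply Rdiv_lt_0_compat; lra).
    apply Rmult_le_reg_r with (INR n); [lra|].
    rewrite Rmult_assoc, Rinv_l, Rmult_1_r by lra.
    assert (6 / e * e = 6) by (field; lra); unfold Rdiv in *; nra. }
  set (q1 := fourier_approx al n (S l)) in *; set (q2 := fourier_approx al n (S (S l))) in *.
  replace (phi_coeff al (S l) + phi_coeff al (S (S l)))%C
    with (((phi_coeff al (S l) - RtoC q1) + (phi_coeff al (S (S l)) - RtoC q2)) + RtoC (q1 + q2))%C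
    by (apply injective_projections; simpl; ring).
  eapply Rle_trans; [apply Cmod_triangle|]; rewrite Cmod_R.
  eapply Rle_trans; [apply Rplus_le_compat_r, Cmod_triangle|].
  unfold phi_coeff in *; unfold Rdiv in *; lra.
Qed.

End CoefficientBounds.

(** * Weighted sums of samples *)

Lemma Rpower_increment_ge (P g : R) : 1 <= P -> 0 <= g < 1 ->
  (1 - g) * Rpower (P + 1) (- g) <= Rpower (P + 1) (1 - g) - Rpower P (1 - g).
Proof.
  intros HP Hg.
  destruct (MVT_gen (fun x => Rpower x (1 - g)) P (P + 1)
              (fun x => (1 - g) * Rpower x (1 - g - 1))) as [c [Hc E]];
    rewrite ?Rmin_left, ?Rmax_right in * by lra.
  - intros x Hx; apply is_derive_Reals, derivable_pt_lim_power; lra.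
  - intros x Hx; apply derivable_continuous_pt.
    exists ((1 - g) * Rpower x (1 - g - 1)); apply derivable_pt_lim_power; lra.
  - rewrite E; replace (P + 1 - P) with 1 by ring; rewrite Rmult_1_r.
    apply Rmult_le_compat_l; [lra|]; replace (1 - g - 1) with (- g) by ring.
    apply Rpower_le_base_nonpos; lra.
Qed.

Lemma rsum_Rpower_le (P : nat) (g : R) : (1 <= P)%nat -> 0 <= g < 1 ->
  rsum (fun i => Rpower (INR (S i)) (- g)) P <= Rpower (INR P) (1 - g) / (1 - g).
Proof.
  intros HP Hg; induction P as [|P IHP]; [lia|].
  destruct P as [|P].
  - simpl; rewrite Rplus_0_l, !Rpower_1_l.
    apply Rmult_le_reg_r with (1 - g); [lra|].
    unfold Rdiv; rewrite Rmult_assoc, Rinv_l, Rmult_1_r by lra; lra.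
  - change (rsum (fun i => Rpower (INR (S i)) (- g)) (S (S P)))
      with (rsum (fun i => Rpower (INR (S i)) (- g)) (S P) + Rpower (INR (S (S P))) (- g)).
    specialize (IHP ltac:(lia)).
    pose proof (Rpower_increment_ge (INR (S P)) g (INR_S_ge_1 P) Hg) as Hstep.
    rewrite <- S_INR in Hstep.
    apply Rle_trans with (Rpower (INR (S P)) (1 - g) / (1 - g) + Rpower (INR (S (S P))) (- g));
      [lra|].
    apply Rmult_le_reg_r with (1 - g); [lra|].
    unfold Rdiv; rewrite Rmult_plus_distr_r, !Rmult_assoc, Rinv_l, !Rmult_1_r by lra; lra.
Qed.

Lemma Rabs_rsum_le_Rpower_sum (a : nat -> R) (A be : R) (M N : nat) :
  0 <= A -> 0 < be < 1 -> (1 <= N)%nat -> (M <= N)%nat ->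
  (forall k, (k < M)%nat -> Rabs (a k) <= A * Rpower (INR (S k)) (- (1 - be))) ->
  Rabs (rsum a M) <= A * (Rpower (INR N) be / be).
Proof.
  intros HA Hbe HN HMN Ha.
  eapply Rle_trans; [apply Rabs_rsum_le|].
  eapply Rle_trans; [apply (rsum_le _ (fun k => A * Rpower (INR (S k)) (- (1 - be)))), Ha|].
  rewrite rsum_scal; apply Rmult_le_compat_l; [exact HA|].
  eapply Rle_trans; [apply rsum_le_length; [exact HMN | intros; apply Rlt_le, Rpower_pos]|].
  pose proof (rsum_Rpower_le N (1 - be) HN ltac:(lra)) as H.
  replace (1 - (1 - be)) with be in H by ring; exact H.
Qed.

Lemma rsum_summation_by_parts_pairs (u x : nat -> R) (M : nat) : x 0%nat = 0 ->
  2 * rsum (fun k => u (S k) * x (S k)) M =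
  rsum (fun k => (u (S k) + u (S (S k))) * x (S k)) M
  + rsum (fun k => u (S k) * (x (S k) - x k)) M - u (S M) * x M.
Proof.
  intros H0; induction M as [|M IHM]; [simpl; rewrite H0; ring|].
  simpl rsum; rewrite Rmult_plus_distr_l, IHM; ring.
Qed.

(* Where [x] is Lipschitz with [x 0 = 0], pairing consecutive coefficients (summation by
   parts) gains a factor [N^(-1)] against the sum of [|u (S k)| ~ k^(-1-al)]. *)
Section LowRegion.
Variables (al C1 C2 K : R) (u x : nat -> R) (N M : nat).
Hypothesis Hal : 0 < al < 1.
Hypothesis HC1 : 0 <= C1.
Hypothesis HC2 : 0 <= C2.
Hypothesis HK : 0 <= K.
Hypothesis Hu1 : forall l, Rabs (u (S l)) <= C1 * Rpower (INR (S l)) (-1 - al).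
Hypothesis Hu2 : forall l, Rabs (u (S l) + u (S (S l))) <= C2 / (INR (S l) * INR (S (S l))).
Hypothesis HM : (1 <= M)%nat.
Hypothesis HMN : (M < N)%nat.
Hypothesis HMN2 : (N <= 2 * (M + 1))%nat.
Hypothesis Hx0 : x 0%nat = 0.
Hypothesis Hx1 : forall l, (l <= M)%nat -> Rabs (x l) <= K * INR l / INR N.
Hypothesis Hx2 : forall k, (k < M)%nat -> Rabs (x (S k) - x k) <= K / INR N.

Let HN : 0 < INR N.
Proof. apply lt_0_INR; lia. Qed.

Let Rpower_S_le (k : nat) (y z : R) : y <= z -> Rpower (INR (S k)) y <= Rpower (INR (S k)) z.
Proof. intros Hy; apply Rle_Rpower; [apply INR_S_ge_1 | exact Hy]. Qed.

Lemma low_region_pairs_le (be : R) : 0 < be < 1 ->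
  Rabs (rsum (fun k => (u (S k) + u (S (S k))) * x (S k)) M)
  <= C2 * K / INR N * (Rpower (INR N) be / be).
Proof.
  intros Hbe; apply Rabs_rsum_le_Rpower_sum; try lia; auto;
    [apply Rmult_le_pos; [nra | apply Rlt_le, Rinv_0_lt_compat, HN]|].
  intros k Hk; rewrite Rabs_mult.
  pose proof (Hu2 k); pose proof (Hx1 (S k) ltac:(lia)).
  pose proof (INR_S_pos k); pose proof (INR_S_pos (S k)).
  apply Rle_trans with (C2 / (INR (S k) * INR (S (S k))) * (K * INR (S k) / INR N));
    [apply Rmult_le_compat; auto; apply Rabs_pos|].
  replace (C2 / (INR (S k) * INR (S (S k))) * (K * INR (S k) / INR N))
    with (C2 * K / INR N * / INR (S (S k))) by (field; lra).
  assert (0 <= C2 * K / INR N) by (apply Rmult_le_pos; [nra | apply Rlt_le, Rinv_0_lt_compat, HN]).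
  apply Rmult_le_compat_l; [assumption|].
  apply Rle_trans with (/ INR (S k)); [apply Rinv_le_contravar; [lra | apply le_INR; lia]|].
  rewrite <- Rpower_m1 by lra; apply Rpower_S_le; lra.
Qed.

Lemma low_region_increments_le (be : R) : 0 < be < 1 ->
  Rabs (rsum (fun k => u (S k) * (x (S k) - x k)) M)
  <= C1 * K / INR N * (Rpower (INR N) be / be).
Proof.
  intros Hbe; apply Rabs_rsum_le_Rpower_sum; try lia; auto;
    [apply Rmult_le_pos; [nra | apply Rlt_le, Rinv_0_lt_compat, HN]|].
  intros k Hk; rewrite Rabs_mult.
  apply Rle_trans with (C1 * Rpower (INR (S k)) (- (1 - be)) * (K / INR N)).
  - apply Rmult_le_compat; try apply Rabs_pos; [|apply Hx2, Hk].
    eapply Rle_trans; [apply Hu1 | apply Rmult_le_compat_l; [exact HC1 | apply Rpower_S_le; lra]].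
  - apply Req_le; field; lra.
Qed.

Lemma low_region_boundary_le : Rabs (u (S M) * x M) <= 2 * C1 * K / INR N.
Proof.
  rewrite Rabs_mult; pose proof (Hu1 M); pose proof (Hx1 M ltac:(lia)).
  pose proof (INR_S_pos M).
  assert (Hm : INR N <= 2 * INR (S M)).
  { assert (H2 : INR N <= INR (2 * S M)) by (apply le_INR; lia).
    rewrite mult_INR in H2; replace (INR 2) with 2 in H2 by (simpl; ring); exact H2. }
  assert (Hu : Rabs (u (S M)) <= C1 * / INR (S M)).
  { eapply Rle_trans; [apply Hu1|]; apply Rmult_le_compat_l; [exact HC1|].
    rewrite <- Rpower_m1 by lra; apply Rle_Rpower; [apply INR_S_ge_1 | lra]. }
  assert (Hxm : Rabs (x M) <= K * INR (S M) / INR N).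
  { eapply Rle_trans; [apply Hx1; lia|]; unfold Rdiv.
    apply Rmult_le_compat_r; [apply Rlt_le, Rinv_0_lt_compat, HN|].
    apply Rmult_le_compat_l; [exact HK | apply le_INR; lia]. }
  apply Rle_trans with (C1 * / INR (S M) * (K * INR (S M) / INR N));
    [apply Rmult_le_compat; auto; apply Rabs_pos|].
  replace (C1 * / INR (S M) * (K * INR (S M) / INR N)) with (C1 * K / INR N) by (field; lra).
  assert (0 <= C1 * K / INR N) by (apply Rmult_le_pos; [nra | apply Rlt_le, Rinv_0_lt_compat, HN]).
  lra.
Qed.

Lemma low_region_bound :
  Rpower (INR N) al * Rabs (rsum (fun k => u (S k) * x (S k)) M)
  <= ((C1 + C2) * K / (1 - al) + C1 * K) * Rpower (INR N) (- ((1 - al) / 2)).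
Proof.
  set (be := (1 - al) / 2).
  assert (Hbe : 0 < be < 1) by (unfold be; lra).
  pose proof (low_region_pairs_le be Hbe) as HD; pose proof (low_region_increments_le be Hbe) as HE.
  pose proof low_region_boundary_le as HB.
  pose proof (rsum_summation_by_parts_pairs u x M Hx0) as Hs.
  assert (Habs : Rabs (rsum (fun k => u (S k) * x (S k)) M)
                 <= / 2 * ((C1 + C2) * K / INR N * (Rpower (INR N) be / be)
                           + 2 * C1 * K / INR N)).
  { replace (rsum (fun k => u (S k) * x (S k)) M)
      with (/ 2 * (2 * rsum (fun k => u (S k) * x (S k)) M)) by field.
    rewrite Rabs_mult, Rabs_right, Hs by lra; apply Rmult_le_compat_l; [lra|].
    match goal with |- Rabs (?A + ?B - ?C) <= _ => replace (A + B - C) with (A + B + - C) by ring end.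
    eapply Rle_trans; [apply Rabs_triang|]; rewrite Rabs_Ropp.
    eapply Rle_trans; [apply Rplus_le_compat_r, Rabs_triang|].
    replace ((C1 + C2) * K / INR N * (Rpower (INR N) be / be))
      with (C2 * K / INR N * (Rpower (INR N) be / be) + C1 * K / INR N * (Rpower (INR N) be / be))
      by (field; lra).
    lra. }
  assert (E : Rpower (INR N) al * / INR N = Rpower (INR N) (- be) * Rpower (INR N) (- be)).
  { rewrite <- Rpower_m1, <- !Rpower_plus by exact HN; f_equal; unfold be; lra. }
  assert (E' : Rpower (INR N) al * / INR N * Rpower (INR N) be = Rpower (INR N) (- be)).
  { rewrite <- Rpower_m1, <- !Rpower_plus by exact HN; f_equal; unfold be; lra. }
  assert (Hle : Rpower (INR N) (- be) <= 1).
  { rewrite <- (Rpower_O (INR N)) by exact HN; apply Rle_Rpower; [apply (le_INR 1); lia | lra]. }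
  pose proof (Rpower_pos (INR N) al); pose proof (Rpower_pos (INR N) (- be)).
  assert (0 <= C1 * K) by nra; assert (0 <= (C1 + C2) * K) by nra.
  eapply Rle_trans; [apply Rmult_le_compat_l; [lra | exact Habs]|].
  replace (Rpower (INR N) al * (/ 2 * ((C1 + C2) * K / INR N * (Rpower (INR N) be / be)
                                      + 2 * C1 * K / INR N)))
    with ((C1 + C2) * K / (1 - al) * (Rpower (INR N) al * / INR N * Rpower (INR N) be)
          + C1 * K * (Rpower (INR N) al * / INR N)) by (unfold be; field; lra).
  rewrite E', E.
  assert (C1 * K * (Rpower (INR N) (- be) * Rpower (INR N) (- be)) <= C1 * K * Rpower (INR N) (- be))
    by (apply Rmult_le_compat_l; [assumption|]; nra).
  lra.
Qed.

End LowRegion.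

(* Near [1] the samples may blow up like [t^(-g)] with [g <= 1 - al], but only the last
   [J <= N / q] of them lie there, where [|u l| <= C1 (N/2)^(-1-al)]. *)
Section HighRegion.
Variables (al C1 B g : R) (u x : nat -> R) (N J q : nat).
Hypothesis Hal : 0 < al < 1.
Hypothesis HC1 : 0 <= C1.
Hypothesis HB : 0 <= B.
Hypothesis Hg : 0 <= g <= 1 - al.
Hypothesis Hu1 : forall l, Rabs (u (S l)) <= C1 * Rpower (INR (S l)) (-1 - al).
Hypothesis HJ : (1 <= J)%nat.
Hypothesis Hq : (2 <= q)%nat.
Hypothesis HqJ : (q * J <= N)%nat.
Hypothesis Hx : forall i, (i < J - 1)%nat ->
  Rabs (x (N - J + 1 + i)%nat) <= B * Rpower (INR (J - 1 - i)) (- g) * Rpower (INR N) g.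

Lemma high_region_sum_le :
  Rabs (rsum (fun i => u (N - J + 1 + i)%nat * x (N - J + 1 + i)%nat) (J - 1))
  <= C1 * Rpower (INR N / 2) (-1 - al) * (B * Rpower (INR N) g)
     * rsum (fun i => Rpower (INR (S i)) (- g)) J.
Proof.
  assert (HN : 0 < INR N) by (apply lt_0_INR; lia).
  set (A := C1 * Rpower (INR N / 2) (-1 - al) * (B * Rpower (INR N) g)).
  assert (HA : 0 <= A).
  { unfold A; pose proof (Rpower_pos (INR N / 2) (-1 - al)); pose proof (Rpower_pos (INR N) g).
    apply Rmult_le_pos; nra. }
  eapply Rle_trans; [apply Rabs_rsum_le|].
  apply Rle_trans with (rsum (fun i => A * Rpower (INR (J - 1 - i)) (- g)) (J - 1)).
  - apply rsum_le; intros i Hi; rewrite Rabs_mult.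
    pose proof (Hx i Hi) as Hxi; pose proof (Hu1 (N - J + i)) as Hui.
    replace (N - J + 1 + i)%nat with (S (N - J + i)) in * by lia.
    assert (Hl : INR N / 2 <= INR (S (N - J + i))).
    { assert (INR N <= INR (2 * S (N - J + i))) by (apply le_INR; nia).
      rewrite mult_INR in H; replace (INR 2) with 2 in H by (simpl; ring); lra. }
    apply Rle_trans with (C1 * Rpower (INR N / 2) (-1 - al)
                          * (B * Rpower (INR (J - 1 - i)) (- g) * Rpower (INR N) g)).
    + apply Rmult_le_compat; try apply Rabs_pos; [|exact Hxi].
      eapply Rle_trans; [exact Hui|]; apply Rmult_le_compat_l; [exact HC1|].
      apply Rpower_le_base_nonpos; lra.
    + unfold A; apply Req_le; ring.
  - rewrite rsum_scal; apply Rmult_le_compat_l; [exact HA|].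
    rewrite (rsum_rev (fun j => Rpower (INR j) (- g)) (J - 1)).
    apply rsum_le_length; [lia | intros; apply Rlt_le, Rpower_pos].
Qed.

Lemma high_region_bound :
  Rpower (INR N) al * Rabs (rsum (fun i => u (N - J + 1 + i)%nat * x (N - J + 1 + i)%nat) (J - 1))
  <= C1 * B * Rpower 2 (1 + al) * Rpower (INR q) (- al) / al.
Proof.
  assert (HN : 0 < INR N) by (apply lt_0_INR; lia).
  assert (HqR : 2 <= INR q) by (replace 2 with (INR 2) by (simpl; ring); apply le_INR; auto).
  assert (HJR : 1 <= INR J) by (apply (le_INR 1); auto).
  pose proof (rsum_Rpower_le J g HJ ltac:(lra)) as Hsum.
  assert (HJq : Rpower (INR J) (1 - g) <= Rpower (INR N / INR q) (1 - g)).
  { apply Rle_Rpower_l; [lra|]; split; [lra|].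
    apply Rmult_le_reg_r with (INR q); [lra|].
    unfold Rdiv; rewrite Rmult_assoc, Rinv_l, Rmult_1_r by lra.
    rewrite <- mult_INR, Nat.mul_comm; apply le_INR; auto. }
  assert (Hexp : Rpower (INR q) (g - 1) <= Rpower (INR q) (- al)) by (apply Rle_Rpower; lra).
  assert (Hinv : / (1 - g) <= / al) by (apply Rinv_le_contravar; lra).
  assert (Hid : Rpower (INR N) al * Rpower (INR N / 2) (-1 - al) * Rpower (INR N) g
                * Rpower (INR N / INR q) (1 - g) = Rpower 2 (1 + al) * Rpower (INR q) (g - 1)).
  { unfold Rpower; rewrite !ln_div by lra; rewrite <- !exp_plus; f_equal; ring. }
  pose proof (Rpower_pos (INR N) al); pose proof (Rpower_pos (INR N / 2) (-1 - al)).
  pose proof (Rpower_pos (INR N) g); pose proof (Rpower_pos (INR J) (1 - g)).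
  pose proof (Rpower_pos 2 (1 + al)).
  assert (0 <= C1 * B) by nra.
  eapply Rle_trans; [apply Rmult_le_compat_l; [lra | apply high_region_sum_le]|].
  apply Rle_trans with (Rpower (INR N) al * (C1 * Rpower (INR N / 2) (-1 - al) * (B * Rpower (INR N) g))
                        * (Rpower (INR N / INR q) (1 - g) / al)).
  - rewrite <- Rmult_assoc; apply Rmult_le_compat_l;
      [apply Rmult_le_pos; [lra|]; apply Rmult_le_pos; nra|].
    eapply Rle_trans; [exact Hsum|]; unfold Rdiv.
    apply Rmult_le_compat; [lra | apply Rlt_le, Rinv_0_lt_compat; lra | exact HJq | exact Hinv].
  - replace (Rpower (INR N) al * (C1 * Rpower (INR N / 2) (-1 - al) * (B * Rpower (INR N) g))
               * (Rpower (INR N / INR q) (1 - g) / al))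
      with (C1 * B / al * (Rpower (INR N) al * Rpower (INR N / 2) (-1 - al) * Rpower (INR N) g
                            * Rpower (INR N / INR q) (1 - g))) by (field; lra).
    rewrite Hid.
    replace (C1 * B * Rpower 2 (1 + al) * Rpower (INR q) (- al) / al)
      with (C1 * B / al * (Rpower 2 (1 + al) * Rpower (INR q) (- al))) by (field; lra).
    apply Rmult_le_compat_l; [apply Rmult_le_pos; [lra | apply Rlt_le, Rinv_0_lt_compat; lra]|].
    apply Rmult_le_compat_l; lra.
Qed.

End HighRegion.

Lemma scaled_Rpower_INR_vanishes (c y e : R) : 0 <= c -> 0 < y -> 0 < e ->
  exists N0 : nat, forall N : nat, (N0 <= N)%nat -> c * Rpower (INR N) (- y) < e.
Proof.
  intros Hc Hy He; destruct (Rpower_INR_vanishes y (e / (c + 1))) as [N0 HN0];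
    [exact Hy | apply Rdiv_lt_0_compat; lra|].
  exists N0; intros N HN; specialize (HN0 N HN).
  apply Rle_lt_trans with (c * (e / (c + 1))); [apply Rmult_le_compat_l; lra|].
  apply Rmult_lt_reg_r with (c + 1); [lra|].
  replace (c * (e / (c + 1)) * (c + 1)) with (c * e) by (field; lra); nra.
Qed.

Lemma XN_lt (f : R -> R) (N l : nat) : (l < N)%nat -> XN f N l = f (INR l / INR N).
Proof. intros Hl; unfold XN; destruct (Nat.ltb_spec l N); [reflexivity | lia]. Qed.

Lemma XN_N (f : R -> R) (N : nat) : XN f N N = 0.
Proof. unfold XN; destruct (Nat.ltb_spec N N); [lia | reflexivity]. Qed.

Lemma rsum_split_low_high (u x : nat -> R) (N J : nat) :
  (1 <= J <= N)%nat -> x 0%nat = 0 -> x N = 0 ->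
  rsum (fun l => u l * x l) (S N)
  = rsum (fun k => u (S k) * x (S k)) (N - J)
    + rsum (fun i => u (N - J + 1 + i)%nat * x (N - J + 1 + i)%nat) (J - 1).
Proof.
  intros HJ Hx0 HxN.
  change (rsum (fun l => u l * x l) (S N)) with (rsum (fun l => u l * x l) N + u N * x N).
  rewrite HxN, Rmult_0_r, Rplus_0_r.
  replace N with (S (N - J) + (J - 1))%nat at 1 by lia.
  rewrite rsum_add, rsum_shift, Hx0, Rmult_0_r, Rplus_0_l; f_equal.
  apply rsum_ext; intros i _; replace (S (N - J) + i)%nat with (N - J + 1 + i)%nat by lia.
  reflexivity.
Qed.

Section Samples.
Variables (f : R -> R) (N : nat).
Hypothesis HN : (0 < N)%nat.

Let HNR : 0 < INR N.
Proof. apply lt_0_INR, HN. Qed.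

Lemma Rabs_XN_le_lipschitz (K b : R) (M : nat) :
  (forall s t, 0 <= s <= b -> 0 <= t <= b -> Rabs (f s - f t) <= K * Rabs (s - t)) ->
  f 0 = 0 -> (M < N)%nat -> INR M / INR N <= b ->
  forall l, (l <= M)%nat -> Rabs (XN f N l) <= K * INR l / INR N.
Proof.
  intros HK Hf0 HMN Hb l Hl.
  assert (Hlb : 0 <= INR l / INR N <= b).
  { split; [apply Rmult_le_pos; [apply pos_INR | apply Rlt_le, Rinv_0_lt_compat, HNR]|].
    eapply Rle_trans; [|exact Hb]; apply Rmult_le_compat_r;
      [apply Rlt_le, Rinv_0_lt_compat, HNR | apply le_INR, Hl]. }
  rewrite XN_lt by lia.
  replace (f (INR l / INR N)) with (f (INR l / INR N) - f 0) by (rewrite Hf0; ring).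
  eapply Rle_trans; [apply HK; lra|].
  rewrite Rminus_0_r, Rabs_right by lra; unfold Rdiv; lra.
Qed.

Lemma Rabs_XN_increment_le (K b : R) (M : nat) :
  (forall s t, 0 <= s <= b -> 0 <= t <= b -> Rabs (f s - f t) <= K * Rabs (s - t)) ->
  (M < N)%nat -> INR M / INR N <= b ->
  forall k, (k < M)%nat -> Rabs (XN f N (S k) - XN f N k) <= K / INR N.
Proof.
  intros HK HMN Hb k Hk.
  assert (Hin : forall l, (l <= M)%nat -> 0 <= INR l / INR N <= b).
  { intros l Hl; split; [apply Rmult_le_pos; [apply pos_INR | apply Rlt_le, Rinv_0_lt_compat, HNR]|].
    eapply Rle_trans; [|exact Hb]; apply Rmult_le_compat_r;
      [apply Rlt_le, Rinv_0_lt_compat, HNR | apply le_INR, Hl]. }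
  rewrite !XN_lt by lia.
  eapply Rle_trans; [apply HK; apply Hin; lia|].
  replace (INR (S k) / INR N - INR k / INR N) with (/ INR N) by (rewrite S_INR; field; lra).
  rewrite Rabs_right by (apply Rle_ge, Rlt_le, Rinv_0_lt_compat, HNR); unfold Rdiv; lra.
Qed.

Lemma Rabs_XN_high_le (B g d : R) (J q : nat) :
  (forall t, 0 < t < d -> Rabs (f (1 - t)) <= B * Rpower t (- g)) ->
  (1 <= J)%nat -> (0 < q)%nat -> (q * J <= N)%nat -> / INR q < d ->
  forall i, (i < J - 1)%nat ->
    Rabs (XN f N (N - J + 1 + i)) <= B * Rpower (INR (J - 1 - i)) (- g) * Rpower (INR N) g.
Proof.
  intros HB HJ Hq HqJ Hqd i Hi.
  assert (Hq' : 0 < INR q) by (apply lt_0_INR, Hq).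
  assert (HJN : (J <= N)%nat) by nia.
  rewrite XN_lt by lia.
  set (t := INR (J - 1 - i) / INR N).
  assert (Ht : INR (N - J + 1 + i) / INR N = 1 - t).
  { unfold t; assert (E : INR (N - J + 1 + i) = INR N - INR (J - 1 - i))
      by (rewrite <- minus_INR by lia; f_equal; lia).
    rewrite E; field; lra. }
  assert (Ht0 : 0 < t) by (apply Rdiv_lt_0_compat; [apply lt_0_INR; lia | exact HNR]).
  assert (Htd : t <= / INR q).
  { assert (INR (J - 1 - i) * INR q <= INR N) by (rewrite <- mult_INR; apply le_INR; nia).
    unfold t; apply Rmult_le_reg_r with (INR N * INR q); [nra|].
    replace (INR (J - 1 - i) / INR N * (INR N * INR q)) with (INR (J - 1 - i) * INR q) by (field; lra).
    replace (/ INR q * (INR N * INR q)) with (INR N) by (field; lra); lra. }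
  rewrite Ht; eapply Rle_trans; [apply HB; lra|].
  rewrite Rmult_assoc; apply Req_le; f_equal.
  unfold t, Rpower; rewrite ln_div by (apply lt_0_INR; lia || exact HNR); rewrite <- exp_plus.
  f_equal; ring.
Qed.

End Samples.

Lemma bigO_0plus_Rpower (h : R -> R) (g : R) :
  bigO_0plus h (fun t => Rpower t (- g)) ->
  exists B d, 0 <= B /\ 0 < d /\ forall t, 0 < t < d -> Rabs (h t) <= B * Rpower t (- g).
Proof.
  intros [B [d [Hd HB]]]; exists (Rabs B), d; split; [apply Rabs_pos | split; [exact Hd|]].
  intros t Ht; eapply Rle_trans; [apply HB, Ht|].
  rewrite Rabs_right by (apply Rle_ge, Rlt_le, exp_pos).
  apply Rmult_le_compat_r; [apply Rlt_le, Rpower_pos | apply Rle_abs].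
Qed.

Lemma locally_contracting_on (f : R -> R) (b : R) : locally_contracting f -> 0 <= b < 1 ->
  exists K, 0 <= K /\ forall s t, 0 <= s <= b -> 0 <= t <= b -> Rabs (f s - f t) <= K * Rabs (s - t).
Proof.
  intros Hlip Hb; destruct (Hlip 0 b (Rle_refl 0) (proj2 Hb)) as [K HK].
  exists (Rabs K); split; [apply Rabs_pos|]; intros s t Hs Ht.
  eapply Rle_trans; [apply HK; auto | apply Rmult_le_compat_r; [apply Rabs_pos | apply Rle_abs]].
Qed.

Lemma exists_nat_inv_lt (d : R) (Q0 : nat) : 0 < d ->
  exists q : nat, (Q0 <= q)%nat /\ (2 <= q)%nat /\ / INR q < d.
Proof.
  intros Hd; destruct (exists_nat_gt (/ d)) as [Qd HQd].
  exists (Q0 + Qd + 2)%nat; split; [lia | split; [lia|]].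
  assert (INR Qd <= INR (Q0 + Qd + 2)) by (apply le_INR; lia).
  pose proof (Rinv_0_lt_compat _ Hd).
  rewrite <- (Rinv_inv d); apply Rinv_lt_contravar; nra.
Qed.

Lemma split_point_le (N J q : nat) : (J <= N)%nat -> (0 < N)%nat -> (N <= 2 * q * J)%nat ->
  INR (N - J) / INR N <= 1 - / (2 * INR q).
Proof.
  intros HJN HN Hn.
  assert (HNR : 0 < INR N) by (apply lt_0_INR; lia).
  assert (Hq : (0 < q)%nat) by nia.
  assert (HqR : 0 < INR q) by (apply lt_0_INR; lia).
  apply le_INR in Hn; rewrite !mult_INR in Hn; replace (INR 2) with 2 in Hn by (simpl; ring).
  rewrite minus_INR by exact HJN.
  apply Rmult_le_reg_r with (2 * INR q * INR N); [nra|].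
  replace ((INR N - INR J) / INR N * (2 * INR q * INR N)) with (2 * INR q * (INR N - INR J))
    by (field; lra).
  replace ((1 - / (2 * INR q)) * (2 * INR q * INR N)) with (2 * INR q * INR N - INR N)
    by (field; lra).
  nra.
Qed.

Section SampleSums.
Variables (al C1 C2 : R) (u : nat -> R) (f : R -> R).
Hypothesis Hal : 0 < al < 1.
Hypothesis HC1 : 0 <= C1.
Hypothesis HC2 : 0 <= C2.
Hypothesis Hu1 : forall l, Rabs (u (S l)) <= C1 * Rpower (INR (S l)) (-1 - al).
Hypothesis Hu2 : forall l, Rabs (u (S l) + u (S (S l))) <= C2 / (INR (S l) * INR (S (S l))).
Hypothesis Hf0 : f 0 = 0.

Lemma scaled_sample_sum_le (B g d K : R) (q N : nat) :
  0 <= B -> 0 <= g <= 1 - al -> 0 <= K ->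
  (forall t, 0 < t < d -> Rabs (f (1 - t)) <= B * Rpower t (- g)) ->
  (forall s t, 0 <= s <= 1 - / (2 * INR q) -> 0 <= t <= 1 - / (2 * INR q) ->
     Rabs (f s - f t) <= K * Rabs (s - t)) ->
  (2 <= q)%nat -> / INR q < d -> (2 * q <= N)%nat ->
  Rpower (INR N) al * Rabs (rsum (fun l => u l * XN f N l) (S N))
  <= ((C1 + C2) * K / (1 - al) + C1 * K) * Rpower (INR N) (- ((1 - al) / 2))
     + C1 * B * Rpower 2 (1 + al) * Rpower (INR q) (- al) / al.
Proof.
  intros HB0 Hg HK HB HKb Hq Hqd HN.
  set (J := (N / q)%nat); set (M := (N - J)%nat).
  assert (HqJ : (q * J <= N)%nat) by apply Nat.Div0.mul_div_le.
  assert (HqJ' : (N < q * S J)%nat) by (apply Nat.mul_succ_div_gt; lia).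
  assert (HJ2 : (2 <= J)%nat) by nia.
  assert (HNR : 0 < INR N) by (apply lt_0_INR; lia).
  assert (HMb : INR M / INR N <= 1 - / (2 * INR q)) by (apply split_point_le; nia).
  assert (Hx0 : XN f N 0 = 0) by (rewrite XN_lt by lia; unfold Rdiv; rewrite Rmult_0_l; exact Hf0).
  rewrite (rsum_split_low_high u (XN f N) N J) by (auto; try apply XN_N; nia).
  pose proof (low_region_bound al C1 C2 K u (XN f N) N M Hal HC1 HC2 HK Hu1 Hu2
                ltac:(unfold M; nia) ltac:(unfold M; lia) ltac:(unfold M; nia) Hx0
                (Rabs_XN_le_lipschitz f N ltac:(lia) K _ M HKb Hf0 ltac:(unfold M; lia) HMb)
                (Rabs_XN_increment_le f N ltac:(lia) K _ M HKb ltac:(unfold M; lia) HMb)) as Hlow.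
  pose proof (high_region_bound al C1 B g u (XN f N) N J q Hal HC1 HB0 Hg Hu1
                ltac:(lia) Hq HqJ
                (Rabs_XN_high_le f N ltac:(lia) B g d J q HB ltac:(lia) ltac:(lia) HqJ Hqd))
    as Hhigh.
  unfold M in Hlow.
  pose proof (Rpower_pos (INR N) al).
  eapply Rle_trans; [apply Rmult_le_compat_l; [lra | apply Rabs_triang]|].
  rewrite Rmult_plus_distr_l; lra.
Qed.

Lemma scaled_sample_sum_vanishes :
  L1_weight al f -> locally_contracting f ->
  forall e, 0 < e -> exists N0, forall N, (N0 <= N)%nat ->
    Rpower (INR N) al * Rabs (rsum (fun l => u l * XN f N l) (S N)) < e.
Proof.
  intros [g [Hg [_ Hsing]]] Hlip e He.
  destruct (bigO_0plus_Rpower (fun t => f (1 - t)) g Hsing) as [B [d [HB0 [Hd HB]]]].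
  set (Ch := C1 * B * Rpower 2 (1 + al) / al).
  assert (HCh : 0 <= Ch).
  { unfold Ch; apply Rmult_le_pos; [apply Rmult_le_pos; [nra | apply Rlt_le, Rpower_pos]|].
    apply Rlt_le, Rinv_0_lt_compat; lra. }
  destruct (scaled_Rpower_INR_vanishes Ch al (e / 2) HCh ltac:(lra) ltac:(lra)) as [Q0 HQ0].
  destruct (exists_nat_inv_lt d Q0 Hd) as [q [HQq [Hq Hqd]]].
  assert (Hb : 0 <= 1 - / (2 * INR q) < 1).
  { assert (2 <= INR q) by (replace 2 with (INR 2) by (simpl; ring); apply le_INR; lia).
    assert (0 < / (2 * INR q) <= / 4)
      by (split; [apply Rinv_0_lt_compat | apply Rinv_le_contravar]; lra); lra. }
  destruct (locally_contracting_on f _ Hlip Hb) as [K [HK HKb]].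
  set (Cl := (C1 + C2) * K / (1 - al) + C1 * K).
  assert (HCl : 0 <= Cl).
  { unfold Cl; apply Rplus_le_le_0_compat; [|nra].
    apply Rmult_le_pos; [nra | apply Rlt_le, Rinv_0_lt_compat; lra]. }
  destruct (scaled_Rpower_INR_vanishes Cl ((1 - al) / 2) (e / 2) HCl ltac:(lra) ltac:(lra))
    as [N1 HN1].
  exists (N1 + 2 * q)%nat; intros N HN.
  eapply Rle_lt_trans; [apply (scaled_sample_sum_le B g d K q N); auto; lia|].
  specialize (HN1 N ltac:(lia)); specialize (HQ0 q HQq).
  replace (C1 * B * Rpower 2 (1 + al) * Rpower (INR q) (- al) / al)
    with (Ch * Rpower (INR q) (- al)) by (unfold Ch; field; lra).
  fold Cl; lra.
Qed.

End SampleSums.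

Lemma scaled_coeff_sample_sum_vanishes (al C1 C2 : R) (c : nat -> C) (f : R -> R) :
  0 < al < 1 -> 0 <= C1 -> 0 <= C2 ->
  (forall l, Cmod (c (S l)) <= C1 * Rpower (INR (S l)) (-1 - al)) ->
  (forall l, Cmod (c (S l) + c (S (S l)))%C <= C2 / (INR (S l) * INR (S (S l)))) ->
  L1_weight al f -> locally_contracting f -> f 0 = 0 ->
  forall e, 0 < e -> exists N0, forall N, (N0 <= N)%nat ->
    Rpower (INR N) al * Cmod (csum (fun l => (c l * RtoC (XN f N l))%C) (S N)) < e.
Proof.
  intros Hal HC1 HC2 Hc1 Hc2 Hw Hlip Hf0 e He.
  destruct (scaled_sample_sum_vanishes al C1 C2 (fun l => Re (c l)) f Hal HC1 HC2
              (fun l => Rle_trans _ _ _ (re_le_Cmod _) (Hc1 l))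
              (fun l => Rle_trans _ _ _ (re_le_Cmod _) (Hc2 l)) Hf0 Hw Hlip (e / 2))
    as [N1 HN1]; [lra|].
  destruct (scaled_sample_sum_vanishes al C1 C2 (fun l => Im (c l)) f Hal HC1 HC2
              (fun l => Rle_trans _ _ _ (im_le_Cmod _) (Hc1 l))
              (fun l => Rle_trans _ _ _ (im_le_Cmod _) (Hc2 l)) Hf0 Hw Hlip (e / 2))
    as [N2 HN2]; [lra|].
  exists (N1 + N2)%nat; intros N HN.
  specialize (HN1 N ltac:(lia)); specialize (HN2 N ltac:(lia)).
  set (s := csum (fun l => (c l * RtoC (XN f N l))%C) (S N)).
  assert (Hre : Re s = rsum (fun l => Re (c l) * XN f N l) (S N))
    by (unfold s; rewrite Re_csum; apply rsum_ext; intros; apply re_scal_r).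
  assert (Him : Im s = rsum (fun l => Im (c l) * XN f N l) (S N))
    by (unfold s; rewrite Im_csum; apply rsum_ext; intros; apply im_scal_r).
  pose proof (Cmod_le_re_im s) as Hs; rewrite Hre, Him in Hs.
  pose proof (Rpower_pos (INR N) al).
  apply Rle_lt_trans with
    (Rpower (INR N) al * (Rabs (rsum (fun l => Re (c l) * XN f N l) (S N))
                          + Rabs (rsum (fun l => Im (c l) * XN f N l) (S N))));
    [apply Rmult_le_compat_l; lra | lra].
Qed.

Lemma Int_part_0 : Int_part 0 = 0%Z.
Proof. unfold Int_part; replace (up 0) with 1%Z by (apply tech_up; simpl; lra); reflexivity. Qed.

Lemma alpha_seq_at_0 (a : R) (f : R -> R) (N : nat) :
  alpha_seq a f 0 N
  = (RtoC (Rpower (INR N) a) * csum (fun l => (phi_coeff a l * RtoC (XN f N l))%C) (S N))%C.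
Proof. unfold alpha_seq; rewrite Rmult_0_r, Int_part_0, sum_n_csum; reflexivity. Qed.

Theorem mainTheorem3 (a : R) (f : R -> R) :
  0 < a < 1 ->
  L1_weight a f ->
  locally_contracting f ->
  f 0 = 0 ->
  is_alpha_derivative a f 0 (RtoC 0).
Proof.
  intros Ha Hw Hlip Hf0 P [eps HP].
  destruct (scaled_coeff_sample_sum_vanishes a (2 * a) 4 (phi_coeff a) f Ha ltac:(lra) ltac:(lra)
              (Cmod_phi_coeff_S_le a Ha) (Cmod_phi_coeff_pair_le a Ha) Hw Hlip Hf0 eps (cond_pos eps))
    as [N0 HN0].
  exists N0; intros N HN; apply HP, ball_C_of_Cmod.
  rewrite alpha_seq_at_0.
  match goal with |- Cmod (Cminus ?x _) < _ => replace (Cminus x (RtoC 0)) with x by ring end.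
  rewrite Cmod_mult, Cmod_R, Rabs_right by (apply Rle_ge, Rlt_le, exp_pos).
  apply HN0, HN.
Qed.
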